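(* Fix $n\ge 2$, a weight $q\in\{1,\dots,n\}$, a constant $c\in(0,1/2)$, and a sequence of integers $\{p_r\}_{r\ge n}$ with $0\le p_r\le r-n$ and $c\le p_r/r\le 1-c$ for all $r$. Then for almost every $x\in\Omega$, \[ \lim_{r\to\infty}\frac{k_{p_r,q}(x;r)}{\binom{r-n}{p_r}\,\mu(r,p_r)} = 1. \]
   Context: Fix an integer $n\ge 2$. For an integer $r\ge n$ write $[r]=\{1,\dots,r\}$ and $\binom{[r]}{n-1}$ for the set of $(n-1)$-element subsets of $[r]$; elements are written $I=\{i_1<\dots<i_{n-1}\}$. A Betti table is an array of real numbers $k_{p,q}$ with columns $p=0,\dots,r-n$ and rows $q=1,\dots,n$. For $I\in\binom{[r]}{n-1}$ write $[r]\setminus I=\{d_0<d_1<\dots<d_{r-n}\}$; the pure diagram $\pi(r,I)$ is the Betti table with $k_{p,q}(\pi(r,I))=0$ if $q\neq d_p-p$, and $k_{p,d_p-p}(\pi(r,I)) = (r-n)!\cdot\prod_{0\le \ell\le r-n,\ \ell\neq p}\frac{1}{|d_\ell-d_p|}$. Let $\binom{[\infty]}{n-1}$ be the set of all $(n-1)$-element subsets of $\mathbb{Z}_{>0}$, and let $\Omega=[0,1]^{\binom{[\infty]}{n-1}}$ carry the product probability measure of the uniform (Lebesgue) measures on the factors. For $x=(x_I)\in\Omega$ and $r\ge n$ set $k_{p,q}(x;r)=\sum_{I\in\binom{[r]}{n-1}} x_I\,k_{p,q}(\pi(r,I))$. For fixed $n$ and $q\in[1,n]$ put \[ \mu(r,p)=\frac{1}{2^n}\cdot\frac{p^{q-1}(r-p-n)^{n-q}}{(q-1)!\,(n-q)!}.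 \] *)

From Stdlib Require Import Reals Lra Lia Arith List Sorted.
Import ListNotations.
Open Scope R_scope.

(* k-element sublists of l, preserving order; with l = [1..r] these are the
   k-subsets of [r], each written as a strictly increasing list. *)
Fixpoint combs (k : nat) (l : list nat) : list (list nat) :=
  match k, l with
  | O, _ => [ [] ]
  | S _, [] => []
  | S k', a :: l' => map (cons a) (combs k' l') ++ combs k l'
  end.

(* [r] \ I, listed increasingly: d_0 < d_1 < ... < d_{r-n} *)
Definition compl (r : nat) (I : list nat) : list nat :=
  filter (fun j => negb (existsb (Nat.eqb j) I)) (seq 1 r).

Definition pure_entry (n r : nat) (I : list nat) (p q : nat) : R :=
  let d := compl r I in
  let dp := nth p d 0%nat in
  if Nat.eqb q (dp - p)%nat then
    INR (fact (r - n)) *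
    fold_right Rmult 1
      (map (fun l => / Rabs (INR (nth l d 0%nat) - INR dp))
           (filter (fun l => negb (Nat.eqb l p)) (seq 0 (r - n + 1))))
  else 0.

(* A point of Omega is modelled as x : list nat -> R; only the values at
   valid indices (strictly increasing lists of n-1 positive integers,
   i.e. (n-1)-subsets of Z_{>0}) matter. *)
Definition valid_index (n : nat) (I : list nat) : Prop :=
  length I = (n - 1)%nat /\ Sorted lt I /\ Forall (fun i => (0 < i)%nat) I.

Definition kpq (n : nat) (x : list nat -> R) (r p q : nat) : R :=
  fold_right Rplus 0
    (map (fun I => x I * pure_entry n r I p q) (combs (n - 1) (seq 1 r))).

Definition mu (n q r p : nat) : R :=
  / (2 ^ n) * ((INR p ^ (q - 1) * INR (r - p - n) ^ (n - q))
               / (INR (fact (q - 1)) * INR (fact (n - q)))).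

(* A cylinder box: finitely many distinct valid coordinates I, each
   constrained to an interval [a,b] subset of [0,1]. *)
Definition box := list (list nat * R * R).

Definition box_wf (n : nat) (B : box) : Prop :=
  Forall (fun t => valid_index n (fst (fst t)) /\
                   0 <= snd (fst t) <= snd t /\ snd t <= 1) B
  /\ NoDup (map (fun t => fst (fst t)) B).

Definition box_meas (B : box) : R :=
  fold_right Rmult 1 (map (fun t => snd t - snd (fst t)) B).

Definition in_box (x : list nat -> R) (B : box) : Prop :=
  Forall (fun t => snd (fst t) <= x (fst (fst t)) <= snd t) B.

Definition in_Omega (n : nat) (x : list nat -> R) : Prop :=
  forall I, valid_index n I -> 0 <= x I <= 1.

(* N is null for the product of Lebesgue measures: for every eps > 0 its
   points in Omega are covered by countably many cylinder boxes of total
   measure <= eps (outer measure zero). *)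
Definition null_set (n : nat) (N : (list nat -> R) -> Prop) : Prop :=
  forall eps, eps > 0 ->
    exists Bs : nat -> box,
      (forall k, box_wf n (Bs k)) /\
      (forall m, sum_f_R0 (fun k => box_meas (Bs k)) m <= eps) /\
      (forall x, in_Omega n x -> N x -> exists k, in_box x (Bs k)).

Definition almost_every (n : nat) (P : (list nat -> R) -> Prop) : Prop :=
  null_set n (fun x => ~ P x).

(* Write [m = p + q]. The entry [k_{p,q}(pi(r,I))] is nonzero exactly when [m] avoids [I] and
   [q - 1] elements of [I] lie below [m]; it then equals
   [(r-n)! / ((m-1)! (r-m)!) * prod_{i in I} |i - m|], so the entries sum to the product of
   elementary symmetric functions [e_{q-1}(1..m-1) e_{n-q}(1..r-m)].  With the weights
   [w_I = k_{p,q}(pi(r,I)) / sum_J k_{p,q}(pi(r,J))] the normalised quantity is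
   [A_r (1 + 2 T_r(x))] with [T_r(x) = sum_I w_I (x_I - 1/2)], where the two-sided bounds
   [(N-k)^(2k) <= 2^k k! e_k(1..N) <= (N(N+1))^k] give [A_r -> 1] and [w_I = O(1/r)] for
   [p_r] linear in [r].  Since the [x_I - 1/2] are independent, centred and bounded,
   [E T_r^4 <= 3 (sum_I w_I^2)^2 / 16 = O(r^-2)], so [T_r^4 > r^(-1/2)] has probability
   [O(r^(-3/2))]; by Borel--Cantelli [T_r -> 0] almost surely.  Probabilities are computed by
   cutting each coordinate involved into [K] cells, matching the box-cover definition of null
   sets. *)

From Stdlib Require Import Reals Lra Lia List Sorted Permutation ZArith Classical.
Import ListNotations.
Open Scope R_scope.

Definition sumR (l : list R) : R := fold_right Rplus 0 l.
Definition prodR (l : list R) : R := fold_right Rmult 1 l.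

Lemma sumR_app l1 l2 : sumR (l1 ++ l2) = sumR l1 + sumR l2.
Proof. induction l1 as [|a l1 IH]; unfold sumR in *; cbn; [lra|]. rewrite IH; lra. Qed.

Lemma prodR_app l1 l2 : prodR (l1 ++ l2) = prodR l1 * prodR l2.
Proof. induction l1 as [|a l1 IH]; unfold prodR in *; cbn; [lra|]. rewrite IH; lra. Qed.

Lemma sumR_perm l1 l2 : Permutation l1 l2 -> sumR l1 = sumR l2.
Proof. induction 1; unfold sumR in *; cbn; lra. Qed.

Lemma prodR_perm l1 l2 : Permutation l1 l2 -> prodR l1 = prodR l2.
Proof. induction 1; unfold prodR in *; cbn; try rewrite IHPermutation; lra. Qed.

Lemma sumR_map_scal {A} (f : A -> R) a l :
  sumR (map (fun x => a * f x) l) = a * sumR (map f l).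
Proof. induction l as [|b l IH]; unfold sumR in *; cbn; [lra|]. rewrite IH; lra. Qed.

Lemma sumR_map_plus {A} (f g : A -> R) l :
  sumR (map (fun x => f x + g x) l) = sumR (map f l) + sumR (map g l).
Proof. induction l as [|b l IH]; unfold sumR in *; cbn; [lra|]. rewrite IH; lra. Qed.

Lemma sumR_map_ext {A} (f g : A -> R) l :
  (forall x, In x l -> f x = g x) -> sumR (map f l) = sumR (map g l).
Proof.
  intros H; induction l as [|b l IH]; unfold sumR in *; cbn; auto.
  rewrite H, IH; cbn; auto. intros; apply H; cbn; auto.
Qed.

Lemma sumR_map_le {A} (f g : A -> R) l :
  (forall x, In x l -> f x <= g x) -> sumR (map f l) <= sumR (map g l).
Proof.
  intros H; induction l as [|b l IH]; unfold sumR in *; cbn; [lra|].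
  assert (f b <= g b) by (apply H; cbn; auto).
  assert (fold_right Rplus 0 (map f l) <= fold_right Rplus 0 (map g l))
    by (apply IH; intros; apply H; cbn; auto).
  lra.
Qed.

Lemma sumR_const {A} (l : list A) a : sumR (map (fun _ => a) l) = INR (length l) * a.
Proof.
  induction l as [|b l IH]; [unfold sumR; cbn; lra|].
  change (length (b :: l)) with (S (length l)). rewrite S_INR.
  unfold sumR in *; cbn. rewrite IH; ring.
Qed.

Lemma sumR_nonneg l : Forall (fun x => 0 <= x) l -> 0 <= sumR l.
Proof. induction 1; unfold sumR in *; cbn; lra. Qed.

Lemma prodR_nonneg l : Forall (fun x => 0 <= x) l -> 0 <= prodR l.
Proof. induction 1; unfold prodR in *; cbn; [lra|]. now apply Rmult_le_pos. Qed.

Lemma prodR_le_pow l b : Forall (fun x => 0 <= x <= b) l -> prodR l <= b ^ length l.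
Proof.
  intros H. induction H as [|x l Hx Hl IH]; unfold prodR in *; cbn; [lra|].
  assert (0 <= fold_right Rmult 1 l).
  { apply prodR_nonneg. eapply Forall_impl; [|exact Hl]. cbn; intros; lra. }
  apply Rmult_le_compat; lra.
Qed.

Lemma prodR_map_inv {A} (h : A -> R) l : prodR (map (fun x => / h x) l) = / prodR (map h l).
Proof.
  induction l as [|a l IH]; unfold prodR in *; cbn; [now rewrite Rinv_1|].
  now rewrite IH, Rinv_mult.
Qed.

Lemma prodR_neq0 l : Forall (fun x => x <> 0) l -> prodR l <> 0.
Proof. induction 1; unfold prodR in *; cbn; [lra|]. now apply Rmult_integral_contrapositive. Qed.

Lemma prodR_seq1 k : prodR (map INR (seq 1 k)) = INR (fact k).
Proof.
  induction k as [|k IH]; [reflexivity|].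
  rewrite seq_S, map_app, prodR_app, IH. cbn [map].
  replace (1 + k)%nat with (S k) by lia. rewrite fact_simpl, mult_INR.
  unfold prodR; cbn. ring.
Qed.

Lemma sumR_seq1 N : sumR (map INR (seq 1 N)) = INR N * (INR N + 1) / 2.
Proof.
  induction N as [|N IH]; [unfold sumR; cbn; lra|].
  rewrite seq_S, map_app, sumR_app, IH. cbn [map].
  replace (1 + N)%nat with (S N) by lia. unfold sumR; cbn -[INR].
  rewrite S_INR. lra.
Qed.

Fixpoint esym (l : list R) (k : nat) : R :=
  match k, l with
  | O, _ => 1
  | S _, [] => 0
  | S k', a :: l' => a * esym l' k' + esym l' k
  end.

Lemma esym_0 l : esym l 0 = 1.
Proof. now destruct l. Qed.

Lemma esym_perm l1 l2 : Permutation l1 l2 -> forall k, esym l1 k = esym l2 k.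
Proof.
  induction 1 as [| a l1 l2 _ IH | a b l | l1 l2 l3 _ IH1 _ IH2]; intros k; auto.
  - destruct k; cbn; rewrite ?IH; auto.
  - destruct k as [|[|k]]; cbn; destruct l; cbn; lra.
  - now rewrite IH1.
Qed.

Lemma esym_nonneg l k : Forall (fun x => 0 <= x) l -> 0 <= esym l k.
Proof.
  intros H; revert k; induction H as [|x l Hx _ IH]; intros [|k]; cbn; try lra.
  pose proof (IH k); pose proof (IH (S k)); nra.
Qed.

Lemma pow_add_ge s x k :
  0 <= s -> 0 <= x -> s ^ S k + INR (S k) * x * s ^ k <= (s + x) ^ S k.
Proof.
  intros Hs Hx; induction k as [|k IH]; [cbn; lra|].
  rewrite S_INR. change ((s + x) ^ S (S k)) with ((s + x) * (s + x) ^ S k).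
  change (s ^ S (S k)) with (s * s ^ S k). change (s ^ S k) with (s * s ^ k) in *.
  assert (0 <= s ^ k) by (apply pow_le; auto).
  assert (0 <= INR (S k) * x * x * s ^ k) by (repeat apply Rmult_le_pos; auto; apply pos_INR).
  assert ((s + x) * (s * s ^ k + INR (S k) * x * s ^ k) <= (s + x) * (s + x) ^ S k)
    by (apply Rmult_le_compat_l; lra).
  rewrite S_INR in *. nra.
Qed.

(* Every product of [k] distinct entries occurs [k!] times in the expansion of [(sum l)^k]. *)
Lemma fact_esym_le_pow l k :
  Forall (fun x => 0 <= x) l -> INR (fact k) * esym l k <= sumR l ^ k.
Proof.
  intros H; revert k; induction H as [|x l Hx Hl IH]; intros [|k]; try (cbn; lra).
  assert (Hs : 0 <= sumR l) by (apply sumR_nonneg; auto).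
  change (sumR (x :: l)) with (x + sumR l). cbn [esym].
  pose proof (IH k) as H1. pose proof (IH (S k)) as H2.
  rewrite fact_simpl, mult_INR in *.
  pose proof (pow_add_ge (sumR l) x k Hs Hx) as H3.
  assert (INR (S k) * INR (fact k) * (x * esym l k) <= INR (S k) * x * sumR l ^ k).
  { assert (0 <= INR (S k) * x) by (apply Rmult_le_pos; [apply pos_INR | auto]). nra. }
  replace (x + sumR l) with (sumR l + x) by ring. nra.
Qed.

Lemma pow_sub_pow_le a b M :
  0 <= b <= a -> a ^ S M - b ^ S M <= INR (S M) * a ^ M * (a - b).
Proof.
  intros Hab. induction M as [|M IH]; [cbn; lra|].
  change (a ^ S (S M)) with (a * a ^ S M). change (b ^ S (S M)) with (b * b ^ S M).
  assert (b ^ S M <= a ^ S M) by (apply pow_incr; lra).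
  assert (a * (a ^ S M - b ^ S M) <= a * (INR (S M) * a ^ M * (a - b)))
    by (apply Rmult_le_compat_l; lra).
  assert (b ^ S M * (a - b) <= a ^ S M * (a - b)) by (apply Rmult_le_compat_r; lra).
  replace (a * a ^ S M - b * b ^ S M) with (a * (a ^ S M - b ^ S M) + b ^ S M * (a - b)) by ring.
  rewrite S_INR. change (a ^ S M) with (a * a ^ M) in *. lra.
Qed.

Lemma bernoulli_ge t k : 0 <= t <= 1 -> 1 - INR k * t <= (1 - t) ^ k.
Proof.
  intros Ht. induction k as [|k IH]; [cbn; lra|]. rewrite S_INR, <- tech_pow_Rmult.
  assert (0 <= (1 - t) ^ k) by (apply pow_le; lra).
  assert ((1 - t) * (1 - INR k * t) <= (1 - t) * (1 - t) ^ k) by (apply Rmult_le_compat_l; lra).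
  assert (0 <= INR k * t * t) by (pose proof (pos_INR k); apply Rmult_le_pos; nra).
  nra.
Qed.

Definition esym_upto (k N : nat) : R := esym (map INR (seq 1 N)) k.

Lemma esym_upto_SS k N : esym_upto (S k) (S N) = INR (S N) * esym_upto k N + esym_upto (S k) N.
Proof.
  unfold esym_upto.
  rewrite (esym_perm (map INR (seq 1 (S N))) (INR (S N) :: map INR (seq 1 N))); [reflexivity|].
  rewrite seq_S, map_app. replace (1 + N)%nat with (S N) by lia.
  apply Permutation_sym, Permutation_cons_append.
Qed.

Lemma INR_seq_nonneg s N : Forall (fun x => 0 <= x) (map INR (seq s N)).
Proof. apply Forall_forall; intros x Hx. apply in_map_iff in Hx as [y [<- _]]; apply pos_INR. Qed.

Lemma esym_upto_nonneg k N : 0 <= esym_upto k N.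
Proof. apply esym_nonneg, INR_seq_nonneg. Qed.

Lemma esym_upto_le k N : 2 ^ k * INR (fact k) * esym_upto k N <= (INR N * (INR N + 1)) ^ k.
Proof.
  pose proof (fact_esym_le_pow _ k (INR_seq_nonneg 1 N)) as H.
  rewrite sumR_seq1 in H.
  replace ((INR N * (INR N + 1)) ^ k) with (2 ^ k * (INR N * (INR N + 1) / 2) ^ k)
    by (rewrite <- Rpow_mult_distr; f_equal; field).
  rewrite Rmult_assoc. apply Rmult_le_compat_l; [apply pow_le; lra | exact H].
Qed.

Lemma esym_upto_ge k N : INR (N - k) ^ (2 * k) <= 2 ^ k * INR (fact k) * esym_upto k N.
Proof.
  revert N; induction k as [|k IHk]; intros N; [unfold esym_upto; rewrite esym_0; cbn; lra|].
  assert (Hc : 0 <= 2 ^ S k * INR (fact (S k)))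
    by (apply Rmult_le_pos; [apply pow_le; lra | apply pos_INR]).
  induction N as [|N IHN].
  { rewrite Nat.sub_0_l, INR_0, pow_i by lia.
    pose proof (esym_upto_nonneg (S k) 0). nra. }
  rewrite esym_upto_SS.
  pose proof (esym_upto_nonneg (S k) N) as E1.
  assert (E0 : 0 <= INR (S N) * esym_upto k N)
    by (apply Rmult_le_pos; [apply pos_INR | apply esym_upto_nonneg]).
  destruct (le_lt_dec N k) as [Hle | Hlt].
  { replace (S N - S k)%nat with 0%nat by lia. rewrite INR_0, pow_i by lia. nra. }
  (* With [t = N - k]: [t^(2k+2) - (t - 1)^(2k+2) <= (2k+2) t^(2k+1)], which the new term
     [2(k+1)(N+1) t^(2k)] of the recursion dominates. *)
  set (t := INR (N - k)).
  assert (Ht1 : INR (N - S k) = t - 1)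
    by (unfold t; replace (N - k)%nat with (S (N - S k)) by lia; rewrite S_INR; ring).
  assert (Ht : 1 <= t <= INR (S N)) by (unfold t; split; [apply (le_INR 1) | apply le_INR]; lia).
  replace (S N - S k)%nat with (N - k)%nat by lia. fold t.
  rewrite Ht1 in IHN. pose proof (IHk N) as Hk. fold t in Hk.
  replace (2 * S k)%nat with (S (S (2 * k))) in * by lia.
  pose proof (pow_sub_pow_le t (t - 1) (S (2 * k)) ltac:(lra)) as Hd.
  replace (t - (t - 1)) with 1 in Hd by ring.
  assert (Hsk : INR (S (S (2 * k))) = 2 * INR (S k)) by (rewrite !S_INR, mult_INR; cbn; ring).
  rewrite Hsk in Hd.
  rewrite fact_simpl, mult_INR in *.
  assert (0 <= t ^ (2 * k)) by (apply pow_le; lra).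
  assert (0 < INR (S k)) by (apply lt_0_INR; lia).
  assert (INR (S N) * t ^ (2 * k) <= INR (S N) * (2 ^ k * INR (fact k) * esym_upto k N))
    by (apply Rmult_le_compat_l; lra).
  assert (t * t ^ (2 * k) <= INR (S N) * t ^ (2 * k)) by (apply Rmult_le_compat_r; lra).
  change (t ^ S (2 * k)) with (t * t ^ (2 * k)) in Hd.
  change (2 ^ S k) with (2 * 2 ^ k) in *.
  nra.
Qed.

Lemma fact_add_bounds s k :
  INR (fact s) * INR s ^ k <= INR (fact (s + k)) <= INR (fact s) * INR (s + k) ^ k.
Proof.
  induction k as [|k [IH1 IH2]]; [rewrite Nat.add_0_r; cbn; lra|].
  replace (s + S k)%nat with (S (s + k)) by lia. rewrite fact_simpl, mult_INR.
  assert (0 <= INR (fact s)) by apply pos_INR.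
  assert (0 <= INR s ^ k) by (apply pow_le, pos_INR).
  assert (INR s <= INR (S (s + k))) by (apply le_INR; lia).
  assert (INR (s + k) ^ k <= INR (S (s + k)) ^ k)
    by (apply pow_incr; split; [apply pos_INR | apply le_INR; lia]).
  rewrite <- !tech_pow_Rmult. split.
  - apply Rle_trans with (INR (S (s + k)) * (INR (fact s) * INR s ^ k)).
    + replace (INR (fact s) * (INR s * INR s ^ k)) with (INR s * (INR (fact s) * INR s ^ k))
        by ring.
      apply Rmult_le_compat_r; [apply Rmult_le_pos|]; auto.
    + apply Rmult_le_compat_l; [apply pos_INR | auto].
  - apply Rle_trans with (INR (S (s + k)) * (INR (fact s) * INR (S (s + k)) ^ k)).
    + apply Rmult_le_compat_l; [apply pos_INR|].
      apply Rle_trans with (INR (fact s) * INR (s + k) ^ k); auto.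
      apply Rmult_le_compat_l; auto.
    + right; ring.
Qed.

Lemma pow_div x y k : y <> 0 -> (x / y) ^ k = x ^ k / y ^ k.
Proof. intros Hy. unfold Rdiv. now rewrite Rpow_mult_distr, pow_inv. Qed.

(* [e_k(1, ..., s + k)] divided by its leading-order asymptotics [(s + k)! s^k / (2^k k! s!)]. *)
Definition esym_norm (k s : nat) : R :=
  2 ^ k * INR (fact k) * esym_upto k (s + k) * INR (fact s) / (INR (fact (s + k)) * INR s ^ k).

Section EsymNorm.

Variables (k s : nat).
Hypothesis Hs : (1 <= s)%nat.

Let x := INR s.
Let kr := INR k.

Lemma esym_norm_ge_pow : (x / (x + kr)) ^ k <= esym_norm k s.
Proof.
  assert (Hx : 1 <= x) by (apply (le_INR 1); lia). assert (Hk : 0 <= kr) by apply pos_INR.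
  pose proof (esym_upto_ge k (s + k)) as L. replace (s + k - k)%nat with s in L by lia.
  pose proof (fact_add_bounds s k) as [_ F]. rewrite plus_INR in F.
  fold x kr in L, F.
  assert (0 < INR (fact s)) by apply INR_fact_lt_0.
  assert (0 < INR (fact (s + k))) by apply INR_fact_lt_0.
  assert (0 < x ^ k) by (apply pow_lt; lra).
  assert (0 < (x + kr) ^ k) by (apply pow_lt; lra).
  unfold esym_norm. fold x.
  rewrite pow_div by lra.
  apply Rmult_le_reg_r with ((x + kr) ^ k * (INR (fact (s + k)) * x ^ k));
    [repeat apply Rmult_lt_0_compat; lra|].
  replace (x ^ k / (x + kr) ^ k * ((x + kr) ^ k * (INR (fact (s + k)) * x ^ k)))
    with (x ^ (2 * k) * INR (fact (s + k)))
    by (replace (2 * k)%nat with (k + k)%nat by lia; rewrite pow_add; field; lra).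
  replace (2 ^ k * INR (fact k) * esym_upto k (s + k) * INR (fact s) /
             (INR (fact (s + k)) * x ^ k) * ((x + kr) ^ k * (INR (fact (s + k)) * x ^ k)))
    with (2 ^ k * INR (fact k) * esym_upto k (s + k) * (INR (fact s) * (x + kr) ^ k))
    by (field; lra).
  apply Rmult_le_compat; auto; try lra. apply pow_le; lra.
Qed.

Lemma esym_norm_le_pow : esym_norm k s <= ((x + kr) * (x + kr + 1) / (x * x)) ^ k.
Proof.
  assert (Hx : 1 <= x) by (apply (le_INR 1); lia). assert (Hk : 0 <= kr) by apply pos_INR.
  pose proof (esym_upto_le k (s + k)) as U. rewrite plus_INR in U.
  pose proof (fact_add_bounds s k) as [F _].
  fold x kr in U, F.
  assert (0 < INR (fact s)) by apply INR_fact_lt_0.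
  assert (0 < x ^ k) by (apply pow_lt; lra).
  assert (0 <= 2 ^ k * INR (fact k) * esym_upto k (s + k)).
  { apply Rmult_le_pos; [apply Rmult_le_pos; [apply pow_le; lra | apply pos_INR]|].
    apply esym_upto_nonneg. }
  unfold esym_norm. fold x.
  assert (0 < INR (fact (s + k))) by apply INR_fact_lt_0.
  set (N := 2 ^ k * INR (fact k) * esym_upto k (s + k)) in *.
  rewrite pow_div, (Rpow_mult_distr x x) by nra.
  apply Rmult_le_reg_r with (INR (fact (s + k)) * x ^ k * (x ^ k * x ^ k));
    [repeat apply Rmult_lt_0_compat; lra|].
  replace (N * INR (fact s) / (INR (fact (s + k)) * x ^ k) *
           (INR (fact (s + k)) * x ^ k * (x ^ k * x ^ k)))
    with (N * (INR (fact s) * x ^ k) * x ^ k) by (field; lra).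
  replace (((x + kr) * (x + kr + 1)) ^ k / (x ^ k * x ^ k) *
           (INR (fact (s + k)) * x ^ k * (x ^ k * x ^ k)))
    with (((x + kr) * (x + kr + 1)) ^ k * INR (fact (s + k)) * x ^ k) by (field; lra).
  apply Rmult_le_compat_r; [lra|].
  apply Rle_trans with (N * INR (fact (s + k))); [apply Rmult_le_compat_l; lra|].
  apply Rmult_le_compat_r; lra.
Qed.

Let a := 2 * kr + 1 + kr * (kr + 1).

Lemma esym_norm_ge : 1 - kr ^ 2 / x <= esym_norm k s.
Proof.
  assert (Hx : 1 <= x) by (apply (le_INR 1); lia). assert (Hk : 0 <= kr) by apply pos_INR.
  assert (H2 : 1 - kr * (kr / (x + kr)) <= (x / (x + kr)) ^ k).
  { replace (x / (x + kr)) with (1 - kr / (x + kr)) by (field; lra).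
    apply bernoulli_ge. split.
    - apply Rmult_le_pos; [lra | left; apply Rinv_0_lt_compat; lra].
    - apply Rmult_le_reg_r with (x + kr); [lra|]. unfold Rdiv; rewrite Rmult_assoc, Rinv_l; lra. }
  assert (H3 : kr * (kr / (x + kr)) <= kr ^ 2 / x).
  { unfold Rdiv. replace (kr ^ 2 * / x) with (kr * (kr * / x)) by ring.
    apply Rmult_le_compat_l; auto. apply Rmult_le_compat_l; auto. apply Rinv_le_contravar; lra. }
  pose proof esym_norm_ge_pow. lra.
Qed.

Lemma esym_norm_le : esym_norm k s <= 1 + kr * a * (1 + a) ^ k / x.
Proof.
  assert (Hx : 1 <= x) by (apply (le_INR 1); lia). assert (Hk : 0 <= kr) by apply pos_INR.
  assert (Ha : 0 <= a) by (unfold a; nra).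
  pose proof esym_norm_le_pow as H1.
  set (y := (x + kr) * (x + kr + 1) / (x * x) - 1).
  replace ((x + kr) * (x + kr + 1) / (x * x)) with (1 + y) in H1 by (unfold y; ring).
  assert (Hy : 0 <= y <= a / x).
  { unfold y, a. split.
    - apply Rplus_le_reg_r with 1. ring_simplify.
      apply Rmult_le_reg_r with (x * x); [nra|].
      unfold Rdiv. rewrite Rmult_assoc, Rinv_l by nra. nra.
    - apply Rmult_le_reg_r with (x * x); [nra|].
      replace (((x + kr) * (x + kr + 1) / (x * x) - 1) * (x * x))
        with ((2 * kr + 1) * x + kr * (kr + 1)) by (field; lra).
      replace ((2 * kr + 1 + kr * (kr + 1)) / x * (x * x))
        with ((2 * kr + 1) * x + kr * (kr + 1) * x) by (field; lra).
      assert (0 <= kr * (kr + 1) * (x - 1)) by (apply Rmult_le_pos; nra). nra. }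
  assert (Hax : a / x <= a).
  { unfold Rdiv. rewrite <- (Rmult_1_r a) at 2. apply Rmult_le_compat_l; auto.
    rewrite <- Rinv_1. apply Rinv_le_contravar; lra. }
  assert (H2 : (1 + y) ^ k - 1 <= kr * (1 + a) ^ k * y).
  { unfold kr. destruct k as [|k']; [cbn; lra|].
    pose proof (pow_sub_pow_le (1 + y) 1 k' ltac:(lra)) as D.
    rewrite pow1 in D. replace (1 + y - 1) with y in D by ring.
    assert ((1 + y) ^ k' <= (1 + a) ^ S k').
    { apply Rle_trans with ((1 + a) ^ k'); [apply pow_incr; lra|].
      cbn. rewrite <- (Rmult_1_l ((1 + a) ^ k')) at 1.
      apply Rmult_le_compat_r; [apply pow_le|]; lra. }
    assert (INR (S k') * (1 + y) ^ k' * y <= INR (S k') * (1 + a) ^ S k' * y)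
      by (apply Rmult_le_compat_r; [lra | apply Rmult_le_compat_l; [apply pos_INR | lra]]).
    lra. }
  assert (kr * (1 + a) ^ k * y <= kr * (1 + a) ^ k * (a / x))
    by (apply Rmult_le_compat_l; [apply Rmult_le_pos; [|apply pow_le]|]; lra).
  unfold Rdiv in *. lra.
Qed.

End EsymNorm.

Lemma esym_norm_dist_le k :
  exists B, 0 <= B /\ forall s, (1 <= s)%nat -> Rabs (esym_norm k s - 1) <= B / INR s.
Proof.
  set (kr := INR k). assert (Hk : 0 <= kr) by apply pos_INR.
  set (a := 2 * kr + 1 + kr * (kr + 1)). assert (Ha : 0 <= a) by (unfold a; nra).
  assert (Hka : 0 <= kr * a * (1 + a) ^ k) by (apply Rmult_le_pos; [nra | apply pow_le; lra]).
  exists (kr ^ 2 + kr * a * (1 + a) ^ k). split; [nra|].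
  intros s Hs. pose proof (esym_norm_ge k s Hs) as Hge. pose proof (esym_norm_le k s Hs) as Hle.
  fold kr in Hge, Hle. fold a in Hle.
  assert (Hx : 0 < / INR s) by (apply Rinv_0_lt_compat, lt_0_INR; lia).
  assert (0 <= kr ^ 2 * / INR s) by (apply Rmult_le_pos; [apply pow_le|]; lra).
  assert (0 <= kr * a * (1 + a) ^ k * / INR s) by (apply Rmult_le_pos; lra).
  apply Rabs_le. unfold Rdiv in *. lra.
Qed.

Lemma combs_length k l I : In I (combs k l) -> length I = k.
Proof.
  revert k I; induction l as [|a l IH]; intros [|k] I H; cbn in H.
  - now destruct H as [<- | []].
  - destruct H.
  - now destruct H as [<- | []].
  - apply in_app_or in H as [H | H]; [|eauto].
    apply in_map_iff in H as [I' [<- H]]. cbn. f_equal. eauto.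
Qed.

Lemma combs_incl k l I : In I (combs k l) -> incl I l.
Proof.
  revert k I; induction l as [|a l IH]; intros [|k] I H; cbn in H.
  - destruct H as [<- | []]; intros x [].
  - destruct H.
  - destruct H as [<- | []]; intros x [].
  - apply in_app_or in H as [H | H]; [|apply incl_tl; eauto].
    apply in_map_iff in H as [I' [<- H]].
    apply incl_cons; [now left | apply incl_tl; eauto].
Qed.

Lemma combs_sorted k l I : StronglySorted lt l -> In I (combs k l) -> StronglySorted lt I.
Proof.
  revert k I; induction l as [|a l IH]; intros [|k] I Hs H; cbn in H.
  - destruct H as [<- | []]; constructor.
  - destruct H.
  - destruct H as [<- | []]; constructor.
  - inversion Hs as [|? ? Hl Ha]; subst.
    apply in_app_or in H as [H | H]; [|eauto].
    apply in_map_iff in H as [I' [<- H]]. constructor; [eauto|].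
    apply combs_incl in H. rewrite Forall_forall in *. auto.
Qed.

Lemma combs_NoDup k l : NoDup l -> NoDup (combs k l).
Proof.
  revert k; induction l as [|a l IH]; intros [|k] Hl; cbn; try (repeat constructor; auto; fail).
  inversion Hl as [|? ? Ha Hl']; subst. apply NoDup_app; auto.
  - apply FinFun.Injective_map_NoDup; auto. intros x y H; now injection H.
  - intros I HI HI'. apply in_map_iff in HI as [I' [<- _]].
    apply Ha, (combs_incl _ _ _ HI'). now left.
Qed.

Lemma seq_sorted s k : StronglySorted lt (seq s k).
Proof.
  revert s; induction k as [|k IH]; intros s; cbn; constructor; auto.
  apply Forall_forall; intros x Hx; apply in_seq in Hx; lia.
Qed.

Lemma combs_seq_valid n r I :
  In I (combs (n - 1) (seq 1 r)) -> valid_index n I /\ NoDup I /\ incl I (seq 1 r).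
Proof.
  intros H. pose proof (combs_sorted _ _ _ (seq_sorted 1 r) H) as Hs.
  pose proof (combs_incl _ _ _ H) as Hi.
  split; [split; [eapply combs_length; eauto | split] | split; auto].
  - now apply StronglySorted_Sorted.
  - apply Forall_forall; intros x Hx. apply Hi, in_seq in Hx. lia.
  - clear H Hi. induction Hs as [|a I _ IH Ha]; constructor; auto.
    rewrite Forall_forall in Ha. intros Hin. specialize (Ha a Hin). lia.
Qed.

Lemma sum_prod_combs (f : nat -> R) l k :
  sumR (map (fun I => prodR (map f I)) (combs k l)) = esym (map f l) k.
Proof.
  revert k; induction l as [|a l IH]; intros [|k]; try (cbn; unfold sumR, prodR; cbn; ring).
  cbn [combs]. rewrite map_app, sumR_app, map_map, IH.
  rewrite (sumR_map_ext _ (fun x => f a * prodR (map f x))) by reflexivity.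
  rewrite sumR_map_scal, IH. cbn. ring.
Qed.

Definition memb (I : list nat) (j : nat) : bool := existsb (Nat.eqb j) I.

Lemma memb_spec I j : memb I j = true <-> In j I.
Proof.
  unfold memb. rewrite existsb_exists. split.
  - intros [x [Hx Heq]]. now apply Nat.eqb_eq in Heq as ->.
  - intros H; exists j; split; auto; apply Nat.eqb_refl.
Qed.

Definition count_lt (m : nat) (I : list nat) : nat := length (filter (fun i => Nat.ltb i m) I).

Definition split_weight (m j : nat) (f : nat -> R) (I : list nat) : R :=
  if (Nat.eqb (count_lt m I) j && negb (memb I m))%bool then prodR (map f I) else 0.

Lemma sum_split_weight_above (m : nat) (f : nat -> R) (B : list nat) :
  Forall (fun b => (m < b)%nat) B -> forall k j,
  sumR (map (split_weight m j f) (combs k (m :: B)))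
  = if Nat.eqb j 0 then esym (map f B) k else 0.
Proof.
  intros HB [|k] j; unfold split_weight.
  { cbn. unfold sumR, count_lt. cbn. destruct j; cbn; rewrite ?esym_0; ring. }
  rewrite Forall_forall in HB.
  cbn [combs]. rewrite map_app, sumR_app.
  rewrite (sumR_map_ext _ (fun _ => 0)).
  2:{ intros I HI. apply in_map_iff in HI as [I' [<- _]].
      unfold memb; cbn. now rewrite Nat.eqb_refl, Bool.andb_false_r. }
  rewrite sumR_const, Rmult_0_r, Rplus_0_l.
  assert (Hc : forall I, In I (combs (S k) B) -> count_lt m I = 0%nat /\ memb I m = false).
  { intros I HI. apply combs_incl in HI. split.
    - unfold count_lt. destruct (filter _ I) as [|i l] eqn:E; auto.
      assert (Hi : In i (filter (fun i => Nat.ltb i m) I)) by (rewrite E; now left).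
      apply filter_In in Hi as [Hi Hlt].
      specialize (HB i (HI i Hi)). apply Nat.ltb_lt in Hlt. lia.
    - destruct (memb I m) eqn:E; auto. apply memb_spec, HI, HB in E. lia. }
  destruct j.
  - rewrite (sumR_map_ext _ (fun I => prodR (map f I)))
      by (intros I HI; now destruct (Hc I HI) as [-> ->]).
    apply sum_prod_combs.
  - rewrite (sumR_map_ext _ (fun _ => 0)) by (intros I HI; now destruct (Hc I HI) as [-> ->]).
    rewrite sumR_const. cbn [Nat.eqb]. ring.
Qed.

(* The [k]-subsets of [A ++ m :: B] avoiding [m] with exactly [j] elements below [m] are the
   unions of a [j]-subset of [A] and a [(k - j)]-subset of [B]. *)
Lemma sum_split_weight (m : nat) (f : nat -> R) (A B : list nat) :
  Forall (fun a => (a < m)%nat) A -> Forall (fun b => (m < b)%nat) B ->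
  forall k j,
  sumR (map (split_weight m j f) (combs k (A ++ m :: B)))
  = if Nat.leb j k then esym (map f A) j * esym (map f B) (k - j) else 0.
Proof.
  intros HA HB. induction A as [|a A IH]; intros k j.
  { cbn [app]. rewrite sum_split_weight_above by auto.
    destruct j as [|j]; [cbn [Nat.eqb Nat.leb]; rewrite esym_0, Nat.sub_0_r; ring|].
    destruct (Nat.leb (S j) k); cbn [Nat.eqb map esym]; ring. }
  inversion HA as [|? ? Ha HA']; subst. specialize (IH HA').
  destruct k as [|k].
  { unfold split_weight. cbn. unfold sumR, count_lt. cbn. destruct j; cbn; rewrite ?esym_0; ring. }
  cbn [app combs]. rewrite map_app, sumR_app, map_map.
  assert (Hcons : forall I, count_lt m (a :: I) = S (count_lt m I) /\ memb (a :: I) m = memb I m).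
  { intros I. unfold count_lt, memb; cbn [filter existsb length].
    replace (Nat.ltb a m) with true by (symmetry; now apply Nat.ltb_lt).
    replace (Nat.eqb m a) with false by (symmetry; apply Nat.eqb_neq; lia).
    split; reflexivity. }
  destruct j as [|j].
  - rewrite (sumR_map_ext _ (fun _ => 0))
      by (intros I _; unfold split_weight; now destruct (Hcons I) as [-> _]).
    rewrite sumR_const, Rmult_0_r, Rplus_0_l, IH. cbn. rewrite esym_0; ring.
  - rewrite (sumR_map_ext _ (fun I => f a * split_weight m j f I)).
    2:{ intros I _. unfold split_weight. destruct (Hcons I) as [-> ->]. cbn [Nat.eqb].
        destruct (_ && _)%bool; [reflexivity | ring]. }
    rewrite sumR_map_scal, !IH. cbn [Nat.leb esym map].
    destruct (Nat.leb j k); [|ring].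
    replace (S k - S j)%nat with (k - j)%nat by lia. ring.
Qed.

Lemma filter_perm {A} (f : A -> bool) l :
  Permutation l (filter f l ++ filter (fun x => negb (f x)) l).
Proof.
  induction l as [|a l IH]; cbn; auto. destruct (f a); cbn.
  - now constructor.
  - now apply Permutation_cons_app.
Qed.

Lemma filter_all {A} (f : A -> bool) l : (forall x, In x l -> f x = true) -> filter f l = l.
Proof.
  induction l as [|a l IH]; intros H; cbn; auto.
  rewrite H by now left. f_equal. apply IH; intros; apply H; now right.
Qed.

Lemma map_nth_seq (a d e : list nat) :
  map (fun l => nth l (a ++ d ++ e) 0%nat) (seq (length a) (length d)) = d.
Proof.
  revert a; induction d as [|y d IH]; intros a; cbn; auto.
  rewrite nth_middle. f_equal.
  specialize (IH (a ++ [y])). rewrite length_app, <- app_assoc in IH. cbn in IH.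
  now rewrite Nat.add_1_r in IH.
Qed.

Lemma prodR_nth_except (g : nat -> R) d1 x d2 :
  prodR (map (fun l => g (nth l (d1 ++ x :: d2) 0%nat))
     (filter (fun l => negb (Nat.eqb l (length d1))) (seq 0 (length d1 + S (length d2)))))
  = prodR (map g d1) * prodR (map g d2).
Proof.
  rewrite seq_app, filter_app. cbn [seq filter]. rewrite Nat.add_0_l, Nat.eqb_refl. cbn [negb].
  rewrite !filter_all.
  2, 3: intros y Hy; apply in_seq in Hy; apply Bool.negb_true_iff, Nat.eqb_neq; lia.
  rewrite map_app, prodR_app, <- !(map_map (fun l => nth l (d1 ++ x :: d2) 0%nat) g). f_equal.
  - do 2 f_equal. apply (map_nth_seq [] d1 (x :: d2)).
  - do 2 f_equal. pose proof (map_nth_seq (d1 ++ [x]) d2 []) as H.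
    rewrite app_nil_r, <- app_assoc, length_app, Nat.add_1_r in H. exact H.
Qed.

Lemma rev_seq1 k : rev (seq 1 k) = map (fun i => (k + 1 - i)%nat) (seq 1 k).
Proof.
  induction k as [|k IH]; auto.
  rewrite seq_S at 1. rewrite rev_app_distr, IH.
  change (seq 1 (S k)) with (1%nat :: seq 2 k). cbn. f_equal; [lia|].
  rewrite <- (seq_shift k 1), map_map. apply map_ext; intros; lia.
Qed.

Lemma map_sub_seq m s b : (m <= s)%nat -> map (fun i => (i - m)%nat) (seq s b) = seq (s - m) b.
Proof. revert s; induction b; intros s H; cbn; auto. f_equal. rewrite IHb by lia. f_equal; lia. Qed.

Definition dist_to (m i : nat) : R := Rabs (INR i - INR m).

Lemma dist_to_below m :
  (1 <= m)%nat -> Permutation (map (dist_to m) (seq 1 (m - 1))) (map INR (seq 1 (m - 1))).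
Proof.
  intros Hm.
  rewrite (map_ext_in _ (fun i => INR (m - 1 + 1 - i))).
  2:{ intros i Hi. apply in_seq in Hi. unfold dist_to. rewrite <- Rabs_Ropp, Rabs_right.
      - rewrite minus_INR by lia. replace (m - 1 + 1)%nat with m by lia. ring.
      - assert (INR i <= INR m) by (apply le_INR; lia). lra. }
  rewrite <- (map_map (fun i => (m - 1 + 1 - i)%nat) INR), <- rev_seq1, map_rev.
  apply Permutation_sym, Permutation_rev.
Qed.

Lemma dist_to_above m b : map (dist_to m) (seq (m + 1) b) = map INR (seq 1 b).
Proof.
  rewrite (map_ext_in _ (fun i => INR (i - m))).
  2:{ intros i Hi. apply in_seq in Hi. unfold dist_to. rewrite Rabs_right.
      - rewrite minus_INR by lia. ring.
      - assert (INR m <= INR i) by (apply le_INR; lia). lra. }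
  rewrite <- (map_map (fun i => (i - m)%nat) INR), map_sub_seq by lia.
  now replace (m + 1 - m)%nat with 1%nat by lia.
Qed.

Lemma seq1_split m r : (1 <= m <= r)%nat -> seq 1 r = seq 1 (m - 1) ++ m :: seq (m + 1) (r - m).
Proof.
  intros Hm. replace r with ((m - 1) + S (r - m))%nat at 1 by lia. rewrite seq_app. f_equal.
  cbn. f_equal; [lia|]. f_equal. lia.
Qed.

Lemma compl_perm r I :
  NoDup I -> incl I (seq 1 r) -> Permutation (seq 1 r) (compl r I ++ I).
Proof.
  intros Hnd Hinc. set (avoid := fun j => negb (memb I j)).
  change (compl r I) with (filter avoid (seq 1 r)).
  eapply Permutation_trans; [apply (filter_perm avoid)|]. apply Permutation_app_head.
  apply NoDup_Permutation; [apply NoDup_filter, seq_NoDup | auto|].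
  intros x. rewrite filter_In. unfold avoid. rewrite Bool.negb_involutive, memb_spec.
  split; [tauto|]. auto.
Qed.

Section Complement.

Variables (r m : nat) (I : list nat).
Hypotheses (Hnd : NoDup I) (Hinc : incl I (seq 1 r)) (Hm : (1 <= m <= r)%nat).

Let avoid := fun j => negb (memb I j).
Let below := filter avoid (seq 1 (m - 1)).
Let above := filter avoid (seq (m + 1) (r - m)).

Lemma compl_split : memb I m = false -> compl r I = below ++ m :: above.
Proof.
  intros Hmem. change (compl r I) with (filter avoid (seq 1 r)).
  rewrite (seq1_split m r Hm), filter_app. cbn. unfold avoid at 2. now rewrite Hmem.
Qed.

Lemma length_below : (length below + count_lt m I)%nat = (m - 1)%nat.
Proof.
  pose proof (Permutation_length (filter_perm avoid (seq 1 (m - 1)))) as H.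
  rewrite length_app, length_seq in H. rewrite H. f_equal.
  unfold count_lt. apply Permutation_length, NoDup_Permutation.
  - apply NoDup_filter, Hnd.
  - apply NoDup_filter, seq_NoDup.
  - intros x. rewrite !filter_In, in_seq. unfold avoid.
    rewrite Bool.negb_involutive, memb_spec, Nat.ltb_lt.
    split; [|intros [H1 H2]; split; auto; lia].
    intros [H1 H2]. pose proof (Hinc _ H1) as H3. apply in_seq in H3. split; [lia | auto].
Qed.

Lemma prodR_dist_to_compl :
  memb I m = false ->
  prodR (map (dist_to m) below) * prodR (map (dist_to m) above) * prodR (map (dist_to m) I)
  = INR (fact (m - 1)) * INR (fact (r - m)).
Proof.
  intros Hmem.
  assert (Hp : Permutation (seq 1 (m - 1) ++ seq (m + 1) (r - m)) (below ++ above ++ I)).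
  { apply Permutation_app_inv with (a := m). rewrite <- (seq1_split m r Hm).
    eapply Permutation_trans; [exact (compl_perm r I Hnd Hinc)|]. rewrite compl_split by auto.
    rewrite <- app_assoc. apply Permutation_refl. }
  apply (Permutation_map (dist_to m)), prodR_perm in Hp.
  rewrite !map_app, !prodR_app in Hp. rewrite Rmult_assoc, <- Hp.
  rewrite (prodR_perm _ _ (dist_to_below m ltac:(lia))), dist_to_above, !prodR_seq1.
  reflexivity.
Qed.

(* The product defining a pure diagram entry, read off at the position [d_p = m] of [[r] \ I]. *)
Lemma prodR_inv_dist_to_compl :
  memb I m = false ->
  prodR (map (fun l => / Rabs (INR (nth l (compl r I) 0%nat) - INR m))
           (filter (fun l => negb (Nat.eqb l (length below))) (seq 0 (length (compl r I)))))
  = prodR (map (dist_to m) I) / (INR (fact (m - 1)) * INR (fact (r - m))).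
Proof.
  intros Hmem. pose proof (prodR_dist_to_compl Hmem) as Hd.
  assert (HI : prodR (map (dist_to m) I) <> 0).
  { apply prodR_neq0, Forall_forall. intros y Hy. apply in_map_iff in Hy as [i [<- Hi]].
    unfold dist_to. apply Rabs_no_R0. intros H0. apply Rminus_diag_uniq, INR_eq in H0.
    subst i. apply memb_spec in Hi. congruence. }
  assert (INR (fact (m - 1)) <> 0) by apply INR_fact_neq_0.
  assert (INR (fact (r - m)) <> 0) by apply INR_fact_neq_0.
  rewrite compl_split, length_app by auto. cbn [length].
  rewrite (prodR_nth_except (fun j => / Rabs (INR j - INR m))), !prodR_map_inv.
  change (fun i => Rabs (INR i - INR m)) with (dist_to m).
  rewrite <- Rinv_mult.
  replace (prodR (map (dist_to m) below) * prodR (map (dist_to m) above))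
    with (INR (fact (m - 1)) * INR (fact (r - m)) / prodR (map (dist_to m) I))
    by (rewrite <- Hd; field; auto).
  field. auto.
Qed.

End Complement.

Definition pure_coef (n r m : nat) : R :=
  INR (fact (r - n)) / (INR (fact (m - 1)) * INR (fact (r - m))).

Lemma pure_coef_pos n r m : 0 < pure_coef n r m.
Proof.
  unfold pure_coef. apply Rdiv_lt_0_compat; [|apply Rmult_lt_0_compat]; apply INR_fact_lt_0.
Qed.

(* [m = p + q] is the [p]-th element [d_p] of [[r] \ I] iff [m] avoids [I] and exactly [q - 1]
   elements of [I] lie below [m]; otherwise [q <> d_p - p] and the entry vanishes. *)
Lemma pure_entry_eq n r I p q :
  (1 <= n <= r)%nat -> (1 <= q <= n)%nat -> (p <= r - n)%nat ->
  NoDup I -> incl I (seq 1 r) -> length I = (n - 1)%nat ->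
  pure_entry n r I p q = pure_coef n r (p + q) * split_weight (p + q) (q - 1) (dist_to (p + q)) I.
Proof.
  intros Hn Hq Hp Hnd Hinc Hlen. set (m := (p + q)%nat).
  assert (Hm : (1 <= m <= r)%nat) by (unfold m; lia).
  assert (Hlc : length (compl r I) = (r - n + 1)%nat).
  { pose proof (Permutation_length (compl_perm r I Hnd Hinc)) as H.
    rewrite length_app, length_seq in H. lia. }
  unfold pure_entry, split_weight; cbv zeta.
  destruct (memb I m) eqn:Hmem.
  { rewrite Bool.andb_false_r, Rmult_0_r.
    destruct (Nat.eqb q (nth p (compl r I) 0%nat - p)) eqn:E; [exfalso | reflexivity].
    apply Nat.eqb_eq in E.
    assert (Hin : In (nth p (compl r I) 0%nat) (compl r I)) by (apply nth_In; lia).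
    replace (nth p (compl r I) 0%nat) with m in Hin by lia.
    apply filter_In in Hin as [_ Hin]. fold (memb I m) in Hin. now rewrite Hmem in Hin. }
  rewrite Bool.andb_true_r.
  pose proof (compl_split r m I Hm Hmem) as Hd. pose proof (length_below r m I Hnd Hinc Hm) as Hlb.
  set (below := filter _ (seq 1 (m - 1))) in Hd, Hlb |- *.
  assert (Hnth : nth (length below) (compl r I) 0%nat = m) by (rewrite Hd; apply nth_middle).
  destruct (Nat.eqb (count_lt m I) (q - 1)) eqn:Ec.
  - apply Nat.eqb_eq in Ec. replace p with (length below) by lia.
    rewrite Hnth. replace (m - length below)%nat with q by lia. rewrite Nat.eqb_refl.
    rewrite <- Hlc. change (fold_right Rmult 1) with prodR.
    rewrite prodR_inv_dist_to_compl by auto. unfold pure_coef. field.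
    split; apply INR_fact_neq_0.
  - destruct (Nat.eqb q (nth p (compl r I) 0%nat - p)) eqn:E; [exfalso | ring].
    apply Nat.eqb_eq in E. apply Nat.eqb_neq in Ec. apply Ec.
    assert (HNd : NoDup (compl r I)) by apply NoDup_filter, seq_NoDup.
    rewrite NoDup_nth with (d := 0%nat) in HNd.
    assert (p = length below) by (apply HNd; [lia | rewrite Hd, length_app; cbn; lia | lia]).
    lia.
Qed.

Definition pure_total (n r p q : nat) : R :=
  sumR (map (fun I => pure_entry n r I p q) (combs (n - 1) (seq 1 r))).

Lemma pure_total_eq n r p q :
  (1 <= n <= r)%nat -> (1 <= q <= n)%nat -> (p <= r - n)%nat ->
  pure_total n r p q =
  pure_coef n r (p + q) * esym_upto (q - 1) (p + q - 1) * esym_upto (n - q) (r - (p + q)).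
Proof.
  intros Hn Hq Hp. set (m := (p + q)%nat). unfold pure_total.
  rewrite (sumR_map_ext _ (fun I => pure_coef n r m * split_weight m (q - 1) (dist_to m) I)).
  2:{ intros I HI. destruct (combs_seq_valid n r I HI) as [[Hl _] [Hnd Hinc]].
      now rewrite pure_entry_eq. }
  rewrite sumR_map_scal, (seq1_split m r) by (unfold m; lia).
  rewrite sum_split_weight.
  - replace (Nat.leb (q - 1) (n - 1)) with true by (symmetry; apply Nat.leb_le; lia).
    rewrite (esym_perm _ _ (dist_to_below m ltac:(unfold m; lia))), dist_to_above.
    replace (n - 1 - (q - 1))%nat with (n - q)%nat by lia.
    replace (m - 1)%nat with (p + q - 1)%nat by reflexivity. unfold esym_upto. ring.
  - apply Forall_forall; intros x Hx; apply in_seq in Hx; lia.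
  - apply Forall_forall; intros x Hx; apply in_seq in Hx; lia.
Qed.

Lemma pure_entry_bounds n r p q I :
  (1 <= n <= r)%nat -> (1 <= q <= n)%nat -> (p <= r - n)%nat -> In I (combs (n - 1) (seq 1 r)) ->
  0 <= pure_entry n r I p q <= pure_coef n r (p + q) * INR r ^ (n - 1).
Proof.
  intros Hn Hq Hp HI. destruct (combs_seq_valid n r I HI) as [[Hl _] [Hnd Hinc]].
  rewrite pure_entry_eq by auto. unfold split_weight.
  pose proof (pure_coef_pos n r (p + q)).
  assert (Hpow : 0 <= INR r ^ (n - 1)) by (apply pow_le, pos_INR).
  destruct (_ && _)%bool; [|split; [lra | nra]].
  assert (Hb : Forall (fun x => 0 <= x <= INR r) (map (dist_to (p + q)) I)).
  { apply Forall_forall; intros y Hy. apply in_map_iff in Hy as [i [<- Hi]].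
    apply Hinc, in_seq in Hi. unfold dist_to. split; [apply Rabs_pos|]. apply Rabs_le.
    assert (INR i <= INR r) by (apply le_INR; lia).
    assert (INR (p + q) <= INR r) by (apply le_INR; lia).
    pose proof (pos_INR i). pose proof (pos_INR (p + q)). lra. }
  pose proof (prodR_le_pow _ _ Hb) as H1. rewrite length_map, Hl in H1.
  assert (0 <= prodR (map (dist_to (p + q)) I)).
  { apply prodR_nonneg. eapply Forall_impl; [|exact Hb]. cbn; intros; lra. }
  split; [nra|]. apply Rmult_le_compat_l; lra.
Qed.

Definition avg (K : nat) (f : nat -> R) : R := / INR K * sumR (map f (seq 0 K)).

Fixpoint cube_avg (K m : nat) (f : list nat -> R) : R :=
  match m with
  | O => f []
  | S m' => avg K (fun g => cube_avg K m' (fun gs => f (g :: gs)))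
  end.

Lemma avg_plus K f g : avg K (fun x => f x + g x) = avg K f + avg K g.
Proof. unfold avg; rewrite sumR_map_plus; ring. Qed.

Lemma avg_scal K a f : avg K (fun x => a * f x) = a * avg K f.
Proof. unfold avg; rewrite sumR_map_scal; ring. Qed.

Lemma avg_ext K f g : (forall x, f x = g x) -> avg K f = avg K g.
Proof. intros H; unfold avg; f_equal; apply sumR_map_ext; auto. Qed.

Lemma avg_le K f g : (forall x, (x < K)%nat -> f x <= g x) -> avg K f <= avg K g.
Proof.
  intros H; unfold avg. apply Rmult_le_compat_l.
  - destruct K; [cbn; rewrite Rinv_0; lra|]. left; apply Rinv_0_lt_compat, lt_0_INR; lia.
  - apply sumR_map_le; intros x Hx; apply in_seq in Hx; apply H; lia.
Qed.

Lemma avg_const K a : (1 <= K)%nat -> avg K (fun _ => a) = a.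
Proof. intros H; unfold avg. rewrite sumR_const, length_seq. field. apply not_0_INR; lia. Qed.

Lemma cube_avg_ext K m f g : (forall x, f x = g x) -> cube_avg K m f = cube_avg K m g.
Proof.
  revert f g; induction m; intros f g H; cbn; auto. apply avg_ext; intros; apply IHm; auto.
Qed.

Lemma cube_avg_plus K m f g : cube_avg K m (fun x => f x + g x) = cube_avg K m f + cube_avg K m g.
Proof.
  revert f g; induction m; intros f g; cbn; auto.
  rewrite <- avg_plus. apply avg_ext; intros; apply IHm.
Qed.

Lemma cube_avg_scal K m a f : cube_avg K m (fun x => a * f x) = a * cube_avg K m f.
Proof.
  revert f; induction m; intros f; cbn; auto.
  rewrite <- avg_scal. apply avg_ext; intros; apply IHm.
Qed.

Lemma cube_avg_const K m a : (1 <= K)%nat -> cube_avg K m (fun _ => a) = a.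
Proof.
  intros HK; induction m; cbn; auto.
  rewrite (avg_ext K _ (fun _ => a)); [now apply avg_const | intros; apply IHm].
Qed.

Lemma cube_avg_le K m f g : (forall x, f x <= g x) -> cube_avg K m f <= cube_avg K m g.
Proof. revert f g; induction m; intros f g H; cbn; auto. apply avg_le; intros; apply IHm; auto. Qed.

Definition cell_mid (K g : nat) : R := (2 * INR g + 1) / (2 * INR K) - 1 / 2.

Lemma cell_mid_reflect K g : (g < K)%nat -> cell_mid K (K - 1 - g) = - cell_mid K g.
Proof. intros H. unfold cell_mid. rewrite !minus_INR by lia. cbn. field. apply not_0_INR; lia. Qed.

Lemma cell_mid_sq_le K g : (g < K)%nat -> cell_mid K g ^ 2 <= 1 / 4.
Proof.
  intros H. unfold cell_mid. assert (0 < INR K) by (apply lt_0_INR; lia).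
  assert (INR g + 1 <= INR K) by (rewrite <- S_INR; apply le_INR; lia).
  pose proof (pos_INR g).
  assert (0 <= (2 * INR g + 1) / (2 * INR K) <= 1); [|nra].
  split; [apply Rmult_le_pos; [lra | left; apply Rinv_0_lt_compat; lra]|].
  apply Rmult_le_reg_r with (2 * INR K); [lra|].
  unfold Rdiv; rewrite Rmult_assoc, Rinv_l; lra.
Qed.

Lemma rev_seq0 K : rev (seq 0 K) = map (fun g => (K - 1 - g)%nat) (seq 0 K).
Proof.
  induction K as [|K IH]; auto.
  rewrite seq_S at 1. rewrite rev_app_distr. cbn. rewrite IH.
  rewrite <- seq_shift, map_map. f_equal; [lia|]. apply map_ext; intros; lia.
Qed.

Lemma avg_odd_0 K (f : nat -> R) :
  (forall g, (g < K)%nat -> f (K - 1 - g)%nat = - f g) -> avg K f = 0.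
Proof.
  intros H. unfold avg.
  assert (E : sumR (map f (seq 0 K)) = sumR (map f (rev (seq 0 K))))
    by apply sumR_perm, Permutation_map, Permutation_rev.
  rewrite rev_seq0, map_map in E.
  rewrite (sumR_map_ext (fun x => f (K - 1 - x)%nat) (fun g => -1 * f g)) in E.
  - rewrite sumR_map_scal in E. replace (sumR (map f (seq 0 K))) with 0 by lra. ring.
  - intros x Hx. apply in_seq in Hx. rewrite H by lia. ring.
Qed.

Lemma avg_cell_mid K : avg K (cell_mid K) = 0.
Proof. apply avg_odd_0, cell_mid_reflect. Qed.

Lemma avg_cell_mid_pow3 K : avg K (fun g => cell_mid K g ^ 3) = 0.
Proof. apply avg_odd_0. intros g Hg. rewrite cell_mid_reflect by auto. ring. Qed.

Lemma avg_cell_mid_pow2 K : (1 <= K)%nat -> 0 <= avg K (fun g => cell_mid K g ^ 2) <= 1 / 4.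
Proof.
  intros HK. rewrite <- (avg_const K 0), <- (avg_const K (1 / 4)) by auto.
  split; apply avg_le; intros g Hg; [apply pow2_ge_0 | now apply cell_mid_sq_le].
Qed.

Lemma avg_cell_mid_pow4 K : (1 <= K)%nat -> 0 <= avg K (fun g => cell_mid K g ^ 4) <= 1 / 16.
Proof.
  intros HK. rewrite <- (avg_const K 0), <- (avg_const K (1 / 16)) by auto.
  split; apply avg_le; intros g Hg;
    replace (cell_mid K g ^ 4) with ((cell_mid K g ^ 2) ^ 2) by ring.
  - apply pow2_ge_0.
  - pose proof (cell_mid_sq_le K g Hg). pose proof (pow2_ge_0 (cell_mid K g)).
    set (A := cell_mid K g ^ 2) in *. replace (A ^ 2) with (A * A) by ring. nra.
Qed.

Fixpoint grid_dev (K : nat) (P : list (list nat * R)) (gs : list nat) : R :=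
  match P, gs with
  | t :: P', g :: gs' => snd t * cell_mid K g + grid_dev K P' gs'
  | _, _ => 0
  end.

Definition sum_sq_weights (P : list (list nat * R)) : R := sumR (map (fun t => snd t ^ 2) P).

Lemma sum_sq_weights_nonneg P : 0 <= sum_sq_weights P.
Proof.
  unfold sum_sq_weights. apply sumR_nonneg, Forall_forall. intros x Hx.
  apply in_map_iff in Hx as [? [<- _]]. apply pow2_ge_0.
Qed.

Lemma sum_sq_weights_le P M :
  (forall t, In t P -> 0 <= snd t <= M) -> sum_sq_weights P <= M * sumR (map snd P).
Proof.
  intros H. unfold sum_sq_weights. rewrite <- sumR_map_scal. apply sumR_map_le.
  intros t Ht. destruct (H t Ht). nra.
Qed.

Lemma cube_avg_grid_dev_pow2 K P :
  (1 <= K)%nat ->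
  0 <= cube_avg K (length P) (fun gs => grid_dev K P gs ^ 2) <= sum_sq_weights P / 4.
Proof.
  intros HK. induction P as [|t P IH]; [cbn; unfold sum_sq_weights, sumR; cbn; lra|].
  cbn [length cube_avg].
  set (E1 := cube_avg K (length P) (grid_dev K P)).
  set (E2 := cube_avg K (length P) (fun gs => grid_dev K P gs ^ 2)) in IH.
  rewrite (avg_ext K _
    (fun g => snd t ^ 2 * cell_mid K g ^ 2 + (2 * snd t * E1) * cell_mid K g + E2)).
  2:{ intros g. cbn [grid_dev].
      rewrite (cube_avg_ext K _ _ (fun gs => snd t ^ 2 * cell_mid K g ^ 2 +
                 ((2 * snd t * cell_mid K g) * grid_dev K P gs + grid_dev K P gs ^ 2)))
        by (intros; ring).
      rewrite cube_avg_plus, cube_avg_const, cube_avg_plus, cube_avg_scal by auto.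
      unfold E1, E2. ring. }
  rewrite !avg_plus, !avg_scal, avg_cell_mid, avg_const by auto.
  pose proof (avg_cell_mid_pow2 K HK). pose proof (pow2_ge_0 (snd t)).
  unfold sum_sq_weights in *; cbn [map]; unfold sumR in *; cbn [fold_right]. nra.
Qed.

(* Khintchine-type bound: writing [grid_dev = a Z + F] with [Z] the first centred midpoint, the
   odd moments of [Z] vanish, so only [a^4 Z^4 + 6 a^2 Z^2 F^2 + F^4] survives averaging. *)
Lemma cube_avg_grid_dev_pow4 K P :
  (1 <= K)%nat ->
  0 <= cube_avg K (length P) (fun gs => grid_dev K P gs ^ 4) <= 3 * sum_sq_weights P ^ 2 / 16.
Proof.
  intros HK. induction P as [|t P IH]; [cbn; unfold sum_sq_weights, sumR; cbn; lra|].
  cbn [length cube_avg].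
  set (Ej := fun j => cube_avg K (length P) (fun gs => grid_dev K P gs ^ j)).
  set (a := snd t).
  rewrite (avg_ext K _ (fun g => a ^ 4 * cell_mid K g ^ 4
     + ((4 * a ^ 3 * Ej 1%nat) * cell_mid K g ^ 3
     + ((6 * a ^ 2 * Ej 2%nat) * cell_mid K g ^ 2
     + ((4 * a * Ej 3%nat) * cell_mid K g + Ej 4%nat))))).
  2:{ intros g. cbn [grid_dev]. fold a.
      rewrite (cube_avg_ext K _ _ (fun gs => a ^ 4 * cell_mid K g ^ 4
         + ((4 * a ^ 3 * cell_mid K g ^ 3) * grid_dev K P gs ^ 1
         + ((6 * a ^ 2 * cell_mid K g ^ 2) * grid_dev K P gs ^ 2
         + ((4 * a * cell_mid K g) * grid_dev K P gs ^ 3 + grid_dev K P gs ^ 4)))))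
        by (intros; ring).
      rewrite !cube_avg_plus, cube_avg_const, !cube_avg_scal by auto. unfold Ej. ring. }
  rewrite !avg_plus, !avg_scal, avg_cell_mid, avg_cell_mid_pow3, avg_const by auto.
  pose proof (avg_cell_mid_pow2 K HK) as Z2. pose proof (avg_cell_mid_pow4 K HK) as Z4.
  pose proof (cube_avg_grid_dev_pow2 K P HK) as M2. fold (Ej 2%nat) in M2. fold (Ej 4%nat) in IH.
  replace (sum_sq_weights (t :: P)) with (a ^ 2 + sum_sq_weights P)
    by (unfold sum_sq_weights, sumR; cbn; fold a; ring).
  pose proof (sum_sq_weights_nonneg P).
  set (z2 := avg K (fun g => cell_mid K g ^ 2)) in *.
  set (z4 := avg K (fun g => cell_mid K g ^ 4)) in *.
  assert (0 <= a ^ 2) by apply pow2_ge_0.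
  assert (0 <= a ^ 4) by (replace (a ^ 4) with ((a ^ 2) ^ 2) by ring; apply pow2_ge_0).
  assert (a ^ 4 * z4 <= a ^ 4 / 16) by nra.
  assert (0 <= a ^ 2 * Ej 2%nat <= a ^ 2 * (sum_sq_weights P / 4)) by (split; nra).
  assert (0 <= a ^ 2 * Ej 2%nat * z2 <= a ^ 2 * (sum_sq_weights P / 4) * (1 / 4)) by (split; nra).
  split; nra.
Qed.

Fixpoint grid_points (K m : nat) : list (list nat) :=
  match m with
  | O => [[]]
  | S m' => flat_map (fun g => map (cons g) (grid_points K m')) (seq 0 K)
  end.

Lemma sumR_flat_map {A B} (f : B -> R) (h : A -> list B) l :
  sumR (map f (flat_map h l)) = sumR (map (fun x => sumR (map f (h x))) l).
Proof. induction l as [|a l IH]; cbn; auto. now rewrite map_app, sumR_app, IH. Qed.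

Lemma sumR_grid_points K m f :
  (1 <= K)%nat -> sumR (map f (grid_points K m)) = INR K ^ m * cube_avg K m f.
Proof.
  intros HK; revert f; induction m as [|m IH]; intros f; [unfold sumR; cbn; ring|].
  cbn [grid_points]. rewrite sumR_flat_map.
  rewrite (sumR_map_ext _ (fun g => INR K ^ m * cube_avg K m (fun gs => f (g :: gs))))
    by (intros g _; now rewrite map_map, IH).
  rewrite sumR_map_scal. cbn [cube_avg pow]. unfold avg. field. apply not_0_INR; lia.
Qed.

Lemma in_grid_points K m gs :
  In gs (grid_points K m) <-> length gs = m /\ Forall (fun g => (g < K)%nat) gs.
Proof.
  revert gs; induction m as [|m IH]; intros gs; cbn.
  - split; [intros [<- | []]; auto | intros [Hl _]; left; now destruct gs].
  - rewrite in_flat_map. split.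
    + intros [g [Hg H]]. apply in_map_iff in H as [gs' [<- H]].
      apply in_seq in Hg. apply IH in H as [H1 H2]. cbn; split; auto. constructor; auto; lia.
    + intros [Hl Hg]. destruct gs as [|g gs]; [discriminate|]. inversion Hg; subst.
      exists g; split; [apply in_seq; lia | apply in_map, IH; auto].
Qed.

Fixpoint cell_box (K : nat) (P : list (list nat * R)) (gs : list nat) : box :=
  match P, gs with
  | t :: P', g :: gs' => (fst t, INR g / INR K, (INR g + 1) / INR K) :: cell_box K P' gs'
  | _, _ => []
  end.

Lemma cell_box_meas K P gs :
  (1 <= K)%nat -> length gs = length P -> box_meas (cell_box K P gs) = (/ INR K) ^ length P.
Proof.
  intros HK; revert gs; induction P as [|t P IH]; intros [|g gs] Hl; cbn in *; try lia; auto.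
  unfold box_meas in *; cbn. rewrite IH by lia. field. apply not_0_INR; lia.
Qed.

Lemma cell_box_keys K P gs :
  length gs = length P -> map (fun t => fst (fst t)) (cell_box K P gs) = map fst P.
Proof.
  revert gs; induction P as [|t P IH]; intros [|g gs] Hl; cbn in *; try lia; auto.
  rewrite IH; auto.
Qed.

Lemma cell_box_wf n K P gs :
  (1 <= K)%nat -> In gs (grid_points K (length P)) ->
  Forall (fun t => valid_index n (fst t)) P -> NoDup (map fst P) -> box_wf n (cell_box K P gs).
Proof.
  intros HK Hgs Hv Hnd. apply in_grid_points in Hgs as [Hl Hg].
  split; [|now rewrite cell_box_keys].
  assert (0 < INR K) by (apply lt_0_INR; lia).
  revert gs Hl Hg;
    induction P as [|t P IH]; intros [|g gs] Hl Hg; cbn in *; try lia; [constructor|].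
  inversion Hg; subst. inversion Hv; subst. inversion Hnd; subst.
  assert (INR g + 1 <= INR K) by (rewrite <- S_INR; apply le_INR; lia).
  pose proof (pos_INR g).
  constructor; [|apply IH; auto].
  cbn. split; auto. split; [split|].
  - apply Rmult_le_pos; [lra | left; apply Rinv_0_lt_compat; lra].
  - unfold Rdiv. apply Rmult_le_compat_r; [left; apply Rinv_0_lt_compat|]; lra.
  - apply Rmult_le_reg_r with (INR K); [lra|]. unfold Rdiv; rewrite Rmult_assoc, Rinv_l; lra.
Qed.

Definition weighted_dev (x : list nat -> R) (P : list (list nat * R)) : R :=
  sumR (map (fun t => snd t * (x (fst t) - 1 / 2)) P).

Lemma cell_exists K v :
  (1 <= K)%nat -> 0 <= v <= 1 -> exists g, (g < K)%nat /\ INR g / INR K <= v <= (INR g + 1) / INR K.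
Proof.
  intros HK Hv. assert (HKp : 0 < INR K) by (apply lt_0_INR; lia).
  assert (Hfl : exists g : nat, INR g <= v * INR K < INR g + 1).
  { destruct (archimed (v * INR K)) as [H1 H2].
    assert (0 <= v * INR K) by nra.
    assert (Hu : (0 < up (v * INR K))%Z) by (apply lt_IZR; lra).
    exists (Z.to_nat (up (v * INR K) - 1)).
    rewrite INR_IZR_INZ, Z2Nat.id, minus_IZR by lia. cbn. lra. }
  destruct Hfl as [g Hg].
  assert (Hmul : forall a, a * INR K / INR K = a) by (intros; field; lra).
  destruct (lt_dec g K) as [Hlt | Hge].
  - exists g; split; auto. rewrite <- (Hmul v). unfold Rdiv.
    split; apply Rmult_le_compat_r; try lra; left; apply Rinv_0_lt_compat; lra.
  - assert (INR K <= INR g) by (apply le_INR; lia).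
    exists (K - 1)%nat; split; [lia|]. rewrite minus_INR by lia. cbn.
    replace ((INR K - 1 + 1) / INR K) with 1 by (field; lra).
    split; [|lra]. rewrite <- (Hmul v). unfold Rdiv.
    apply Rmult_le_compat_r; [left; apply Rinv_0_lt_compat|]; nra.
Qed.

Lemma cell_mid_dist K g v :
  (1 <= K)%nat -> INR g / INR K <= v <= (INR g + 1) / INR K ->
  Rabs (v - 1 / 2 - cell_mid K g) <= / (2 * INR K).
Proof.
  intros HK Hv. assert (HKp : 0 < INR K) by (apply lt_0_INR; lia).
  replace (v - 1 / 2 - cell_mid K g) with ((v * INR K - INR g - 1 / 2) / INR K)
    by (unfold cell_mid; field; lra).
  replace (/ (2 * INR K)) with ((1 / 2) / INR K) by (field; lra).
  unfold Rdiv. rewrite Rabs_mult, Rabs_inv, (Rabs_right (INR K)) by lra.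
  apply Rmult_le_compat_r; [left; apply Rinv_0_lt_compat; lra|].
  apply Rabs_le.
  assert (INR g <= v * INR K <= INR g + 1); [|lra].
  destruct Hv as [H1 H2]. unfold Rdiv in *.
  split; [apply Rmult_le_reg_r with (/ INR K) | apply Rmult_le_reg_r with (/ INR K)];
    try (apply Rinv_0_lt_compat; lra); rewrite Rmult_assoc, Rinv_r, Rmult_1_r; lra.
Qed.

Lemma cover_by_cell K P x :
  (1 <= K)%nat -> (forall t, In t P -> 0 <= x (fst t) <= 1) ->
  exists gs, In gs (grid_points K (length P)) /\ in_box x (cell_box K P gs) /\
    Rabs (weighted_dev x P - grid_dev K P gs) <= sumR (map (fun t => Rabs (snd t)) P) / (2 * INR K).
Proof.
  intros HK; induction P as [|t P IH]; intros Hx.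
  { exists []. cbn. split; auto. split; [constructor|].
    unfold weighted_dev, sumR; cbn. rewrite Rminus_0_r, Rabs_R0. lra. }
  destruct IH as [gs [H1 [H2 H3]]]; [intros; apply Hx; now right|].
  destruct (cell_exists K (x (fst t)) HK) as [g [Hg1 Hg2]]; [apply Hx; now left|].
  exists (g :: gs). split; [|split].
  - apply in_grid_points in H1 as [? ?]. apply in_grid_points. cbn; auto.
  - now constructor.
  - pose proof (cell_mid_dist K g (x (fst t)) HK Hg2) as Hc.
    unfold weighted_dev in *. cbn [map grid_dev]. unfold sumR in *. cbn [fold_right].
    match goal with |- Rabs ?e <= _ => replace e with
      (snd t * (x (fst t) - 1 / 2 - cell_mid K g) +
       (fold_right Rplus 0 (map (fun t => snd t * (x (fst t) - 1 / 2)) P) - grid_dev K P gs))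
      by ring end.
    eapply Rle_trans; [apply Rabs_triang|]. rewrite Rabs_mult.
    assert (Rabs (snd t) * Rabs (x (fst t) - 1 / 2 - cell_mid K g) <= Rabs (snd t) * / (2 * INR K))
      by (apply Rmult_le_compat_l; auto; apply Rabs_pos).
    unfold Rdiv in *. lra.
Qed.

Lemma sumR_filter {A} (f : A -> R) (b : A -> bool) l :
  sumR (map f (filter b l)) = sumR (map (fun x => if b x then f x else 0) l).
Proof.
  induction l as [|a l IH]; cbn; auto. destruct (b a); unfold sumR in *; cbn; rewrite IH; ring.
Qed.

Lemma pow4_add_le u h : 0 <= u -> 0 <= h -> (u + h) ^ 4 <= 8 * (u ^ 4 + h ^ 4).
Proof.
  intros Hu Hh.
  assert (0 <= (u - h) ^ 2 * ((u + h) ^ 2 + 2 * (u ^ 2 + h ^ 2)))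
    by (apply Rmult_le_pos; [apply pow2_ge_0 | nra]).
  pose proof (pow2_ge_0 (u ^ 2 - h ^ 2)). nra.
Qed.

Lemma pow4_Rabs x : Rabs x ^ 4 = x ^ 4.
Proof. replace 4%nat with (2 * 2)%nat by reflexivity. now rewrite !pow_mult, pow2_abs. Qed.

(* The cells on which [grid_dev^4] exceeds [eps / 16]: Markov's inequality bounds their total
   measure, and the margin [eps / 16 < eps] absorbs the discretisation error. *)
Definition dev_cover (K : nat) (P : list (list nat * R)) (eps : R) : list box :=
  map (cell_box K P)
    (filter (fun gs => if Rlt_dec (eps / 16) (grid_dev K P gs ^ 4) then true else false)
       (grid_points K (length P))).

Section DevCover.

Variables (n K : nat) (P : list (list nat * R)) (eps : R).
Hypothesis HK : (1 <= K)%nat.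

Lemma dev_cover_wf :
  Forall (fun t => valid_index n (fst t)) P -> NoDup (map fst P) ->
  Forall (box_wf n) (dev_cover K P eps).
Proof.
  intros Hv Hnd. apply Forall_forall; intros B HB.
  apply in_map_iff in HB as [gs [<- HB]]. apply filter_In in HB as [HB _].
  now apply cell_box_wf.
Qed.

Lemma dev_cover_meas_le :
  0 < eps -> sumR (map box_meas (dev_cover K P eps)) <= 3 * sum_sq_weights P ^ 2 / eps.
Proof.
  intros Heps.
  assert (HKp : 0 < INR K) by (apply lt_0_INR; lia).
  unfold dev_cover. rewrite map_map, sumR_filter.
  set (bad := fun gs => if Rlt_dec (eps / 16) (grid_dev K P gs ^ 4) then 1 else 0).
  rewrite (sumR_map_ext _ (fun gs => (/ INR K) ^ length P * bad gs)).
  2:{ intros gs Hgs. apply in_grid_points in Hgs as [Hl _]. unfold bad.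
      destruct (Rlt_dec _ _); [rewrite cell_box_meas by auto |]; ring. }
  rewrite sumR_map_scal, sumR_grid_points by auto.
  rewrite <- Rmult_assoc, <- Rpow_mult_distr, Rinv_l, pow1, Rmult_1_l by lra.
  apply Rle_trans with (cube_avg K (length P) (fun gs => 16 / eps * grid_dev K P gs ^ 4)).
  - apply cube_avg_le. intros gs. unfold bad.
    assert (0 <= grid_dev K P gs ^ 4)
      by (replace (grid_dev K P gs ^ 4) with ((grid_dev K P gs ^ 2) ^ 2) by ring; apply pow2_ge_0).
    destruct (Rlt_dec _ _) as [Hl | Hl].
    + apply Rmult_le_reg_l with (eps / 16); [lra|]. field_simplify; lra.
    + apply Rmult_le_pos; [|lra].
      unfold Rdiv; apply Rmult_le_pos; [lra | left; apply Rinv_0_lt_compat; lra].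
  - rewrite cube_avg_scal. pose proof (cube_avg_grid_dev_pow4 K P HK) as [_ M].
    apply Rmult_le_reg_l with (eps / 16); [lra|].
    replace (eps / 16 * (3 * sum_sq_weights P ^ 2 / eps)) with (3 * sum_sq_weights P ^ 2 / 16)
      by (field; lra).
    replace (eps / 16 * (16 / eps * cube_avg K (length P) (fun gs => grid_dev K P gs ^ 4)))
      with (cube_avg K (length P) (fun gs => grid_dev K P gs ^ 4)) by (field; lra).
    exact M.
Qed.

Lemma dev_cover_covers :
  (/ (2 * INR K)) ^ 4 <= eps / 16 ->
  Forall (fun t => valid_index n (fst t)) P ->
  Forall (fun t => 0 <= snd t) P -> sumR (map snd P) <= 1 ->
  forall x, in_Omega n x -> eps < weighted_dev x P ^ 4 ->
  exists B, In B (dev_cover K P eps) /\ in_box x B.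
Proof.
  intros Hh Hv Hw Hs x Hx HT.
  assert (HKp : 0 < INR K) by (apply lt_0_INR; lia).
  rewrite Forall_forall in Hv, Hw.
  destruct (cover_by_cell K P x HK) as [gs [H1 [H2 H3]]]; [intros t Ht; apply Hx, Hv, Ht|].
  exists (cell_box K P gs). split; auto.
  apply in_map, filter_In. split; auto.
  destruct (Rlt_dec _ _) as [|Hl]; auto. exfalso. apply Hl.
  set (h := / (2 * INR K)) in *.
  assert (Hh0 : 0 < h) by (apply Rinv_0_lt_compat; lra).
  assert (H3' : Rabs (weighted_dev x P - grid_dev K P gs) <= h).
  { eapply Rle_trans; [exact H3|]. unfold Rdiv. fold h.
    rewrite (sumR_map_ext _ snd) by (intros t Ht; apply Rabs_right, Rle_ge, Hw, Ht).
    rewrite <- (Rmult_1_l h) at 2. apply Rmult_le_compat_r; lra. }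
  set (u := Rabs (grid_dev K P gs)).
  assert (HT1 : Rabs (weighted_dev x P) <= u + h).
  { replace (weighted_dev x P) with ((weighted_dev x P - grid_dev K P gs) + grid_dev K P gs)
      by ring.
    eapply Rle_trans; [apply Rabs_triang|]. unfold u; lra. }
  assert (HT2 : weighted_dev x P ^ 4 <= (u + h) ^ 4).
  { rewrite <- (pow4_Rabs (weighted_dev x P)). apply pow_incr; split; [apply Rabs_pos | auto]. }
  pose proof (pow4_add_le u h (Rabs_pos _) ltac:(lra)).
  unfold u in *. rewrite pow4_Rabs in *. lra.
Qed.

End DevCover.

Lemma almost_every_mono n (P Q : (list nat -> R) -> Prop) :
  (forall x, P x -> Q x) -> almost_every n P -> almost_every n Q.
Proof.
  unfold almost_every, null_set. intros HPQ HP eps Heps.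
  destruct (HP eps Heps) as [Bs [Hwf [Hsum Hcov]]].
  exists Bs. split; [|split]; auto.
Qed.

Lemma box_meas_nonneg n B : box_wf n B -> 0 <= box_meas B.
Proof.
  intros [H _]. unfold box_meas. induction H as [|t B Ht _ IH]; cbn; [lra|].
  apply Rmult_le_pos; auto. destruct Ht as [_ [[_ ?] _]]. lra.
Qed.

(* Padding that makes the [k]-th box of the enumeration in [null_set_of_box_families] exist. *)
Definition null_box (n : nat) : box := [(seq 1 (n - 1), 0, 0)].

Lemma null_box_wf n : box_wf n (null_box n).
Proof.
  split; cbn.
  - constructor; [|constructor]. cbn. split; [|lra].
    split; [apply length_seq | split].
    + now apply StronglySorted_Sorted, seq_sorted.
    + apply Forall_forall; intros x Hx; apply in_seq in Hx; lia.
  - constructor; [intros [] | constructor].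
Qed.

Lemma null_box_meas n : box_meas (null_box n) = 0.
Proof. unfold box_meas; cbn. ring. Qed.

Fixpoint boxes_upto (n : nat) (Ls : nat -> list box) (M : nat) : list box :=
  match M with
  | O => null_box n :: Ls O
  | S M' => boxes_upto n Ls M' ++ (null_box n :: Ls (S M'))
  end.

Lemma boxes_upto_length n Ls M : (S M <= length (boxes_upto n Ls M))%nat.
Proof. induction M; cbn; [lia|]. rewrite length_app; cbn; lia. Qed.

Lemma boxes_upto_nth n Ls M M' k :
  (M <= M')%nat -> (k < length (boxes_upto n Ls M))%nat ->
  nth k (boxes_upto n Ls M') (null_box n) = nth k (boxes_upto n Ls M) (null_box n).
Proof.
  intros H1 H2. assert (exists t, boxes_upto n Ls M' = boxes_upto n Ls M ++ t) as [t ->].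
  { induction H1 as [|m _ [t Ht]]; [exists []; now rewrite app_nil_r|].
    exists (t ++ null_box n :: Ls (S m)). cbn. now rewrite Ht, app_assoc. }
  now apply app_nth1.
Qed.

Lemma boxes_upto_sum n Ls M :
  sumR (map box_meas (boxes_upto n Ls M)) = sum_f_R0 (fun j => sumR (map box_meas (Ls j))) M.
Proof.
  induction M as [|M IH]; cbn [boxes_upto sum_f_R0].
  - cbn [map]. unfold sumR at 1; cbn [fold_right]. rewrite null_box_meas. unfold sumR; ring.
  - rewrite map_app, sumR_app, IH. cbn [map]. unfold sumR at 2; cbn [fold_right].
    rewrite null_box_meas. unfold sumR; ring.
Qed.

Lemma boxes_upto_wf n Ls M :
  (forall j, Forall (box_wf n) (Ls j)) -> Forall (box_wf n) (boxes_upto n Ls M).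
Proof.
  intros H; induction M; cbn; [constructor; auto; apply null_box_wf|].
  apply Forall_app; split; auto. constructor; auto; apply null_box_wf.
Qed.

Lemma sum_f_R0_nth_le (l : list R) m d :
  Forall (fun x => 0 <= x) l -> (m < length l)%nat -> sum_f_R0 (fun k => nth k l d) m <= sumR l.
Proof.
  revert m; induction l as [|a l IH]; intros m Hl Hm; cbn in Hm; [lia|].
  inversion Hl as [|? ? Ha Hl']; subst. pose proof (sumR_nonneg l Hl').
  destruct m as [|m]; [unfold sumR in *; cbn; lra|].
  rewrite decomp_sum by lia. cbn [pred nth]. pose proof (IH m Hl' ltac:(lia)).
  unfold sumR in *; cbn [fold_right]. lra.
Qed.

Lemma null_set_of_box_families n (N : (list nat -> R) -> Prop) :
  (forall eps, eps > 0 -> exists Ls : nat -> list box,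
      (forall j, Forall (box_wf n) (Ls j)) /\
      (forall M, sum_f_R0 (fun j => sumR (map box_meas (Ls j))) M <= eps) /\
      (forall x, in_Omega n x -> N x -> exists j B, In B (Ls j) /\ in_box x B)) ->
  null_set n N.
Proof.
  intros H eps He. destruct (H eps He) as [Ls [Hwf [Hsum Hcov]]].
  pose proof (fun M => proj1 (Forall_forall _ _) (boxes_upto_wf n Ls M Hwf)) as Hwf'.
  exists (fun k => nth k (boxes_upto n Ls k) (null_box n)). split; [|split].
  - intros k. apply (Hwf' k), nth_In. pose proof (boxes_upto_length n Ls k); lia.
  - intros m. eapply Rle_trans; [|apply (Hsum m)]. rewrite <- (boxes_upto_sum n).
    rewrite (sum_eq _ (fun k => nth k (map box_meas (boxes_upto n Ls m)) 0)).
    + apply sum_f_R0_nth_le.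
      * apply Forall_forall; intros y Hy. apply in_map_iff in Hy as [B [<- HB]].
        eapply box_meas_nonneg, (Hwf' m), HB.
      * rewrite length_map. pose proof (boxes_upto_length n Ls m); lia.
    + intros k Hk. rewrite <- null_box_meas with (n := n), map_nth.
      rewrite (boxes_upto_nth n Ls k m k); auto. pose proof (boxes_upto_length n Ls k); lia.
  - intros x Hx HN. destruct (Hcov x Hx HN) as [j [B [HB Hin]]].
    assert (HB' : In B (boxes_upto n Ls j))
      by (destruct j; cbn; auto; apply in_or_app; right; now right).
    apply (In_nth _ _ (null_box n)) in HB' as [k [Hk Hnth]].
    exists k. rewrite <- (boxes_upto_nth n Ls j (max j k) k) in Hnth by lia.
    rewrite (boxes_upto_nth n Ls k (max j k) k) in Hnth;
      [now rewrite Hnth | lia | pose proof (boxes_upto_length n Ls k); lia].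
Qed.

Lemma nat_above (y : R) : exists N : nat, y <= INR N.
Proof.
  destruct (archimed y) as [Ha _]. exists (Z.to_nat (up y)).
  destruct (Z_le_gt_dec 0 (up y)).
  - rewrite INR_IZR_INZ, Z2Nat.id by lia. lra.
  - assert (IZR (up y) < 0) by (apply IZR_lt; lia). pose proof (pos_INR (Z.to_nat (up y))). lra.
Qed.

Lemma Un_cv_const a : Un_cv (fun _ => a) a.
Proof. intros e He. exists O. intros. unfold Rdist. rewrite Rminus_diag, Rabs_R0. lra. Qed.

Lemma Un_cv_eventually (u v : nat -> R) l N0 :
  (forall r, (N0 <= r)%nat -> u r = v r) -> Un_cv v l -> Un_cv u l.
Proof.
  intros H Hv e He. destruct (Hv e He) as [N HN]. exists (max N N0). intros r Hr.
  rewrite H by lia. apply HN; lia.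
Qed.

Lemma Un_cv_of_dist_le_inv (u : nat -> R) l A N0 :
  (forall r, (N0 <= r)%nat -> Rabs (u r - l) <= A / INR r) -> Un_cv u l.
Proof.
  intros H e He. destruct (nat_above (Rabs A / e)) as [N HN].
  exists (S (N0 + N)). intros r Hr. unfold Rdist.
  assert (Hr0 : INR N < INR r) by (apply lt_INR; lia).
  pose proof (pos_INR N).
  eapply Rle_lt_trans; [apply H; lia|].
  apply Rle_lt_trans with (Rabs A / INR r).
  - unfold Rdiv. apply Rmult_le_compat_r; [left; apply Rinv_0_lt_compat; lra | apply Rle_abs].
  - apply Rmult_lt_reg_r with (INR r); [lra|]. unfold Rdiv. rewrite Rmult_assoc, Rinv_l by lra.
    apply Rmult_lt_reg_r with (/ e); [apply Rinv_0_lt_compat; lra|].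
    replace (e * INR r * / e) with (INR r) by (field; lra). lra.
Qed.

Lemma Un_cv_0_of_pow4_le (u : nat -> R) N0 :
  (forall r, (N0 <= r)%nat -> u r ^ 4 <= / sqrt (INR r)) -> Un_cv u 0.
Proof.
  intros H e He. destruct (nat_above ((/ e ^ 4) ^ 2)) as [N HN].
  exists (S (N0 + N)). intros r HrN. unfold Rdist. rewrite Rminus_0_r.
  destruct (Rlt_le_dec (Rabs (u r)) e) as [h | h]; auto. exfalso.
  assert (He4 : 0 < e ^ 4) by (apply pow_lt; lra).
  assert (0 < INR r) by (apply lt_0_INR; lia).
  assert (Hr : (/ e ^ 4) ^ 2 < INR r) by (eapply Rle_lt_trans; [exact HN | apply lt_INR; lia]).
  assert (Hsq : / e ^ 4 < sqrt (INR r)).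
  { rewrite <- (sqrt_pow2 (/ e ^ 4)) by (left; apply Rinv_0_lt_compat; lra).
    apply sqrt_lt_1_alt. split; [apply pow2_ge_0 | exact Hr]. }
  assert (/ sqrt (INR r) < e ^ 4).
  { rewrite <- (Rinv_inv (e ^ 4)). apply Rinv_lt_contravar; [|exact Hsq].
    apply Rmult_lt_0_compat; [apply Rinv_0_lt_compat; lra | apply sqrt_lt_R0; lra]. }
  assert (e ^ 4 <= u r ^ 4).
  { rewrite <- (pow4_Rabs (u r)). apply pow_incr; lra. }
  pose proof (H r ltac:(lia)). lra.
Qed.

Lemma inv_pow_3_2_le_telescope x :
  1 < x -> / (x * sqrt x) <= 2 * (/ sqrt (x - 1) - / sqrt x).
Proof.
  intros Hx. set (a := sqrt (x - 1)). set (b := sqrt x).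
  assert (Ha : 0 < a) by (apply sqrt_lt_R0; lra).
  assert (Hb : 0 < b) by (apply sqrt_lt_R0; lra).
  assert (Ha2 : a * a = x - 1) by (apply sqrt_sqrt; lra).
  assert (Hb2 : b * b = x) by (apply sqrt_sqrt; lra).
  assert (Hab : a <= b) by (apply sqrt_le_1_alt; lra).
  rewrite <- Hb2.
  (* [b - a = 1 / (a + b)] *)
  replace (2 * (/ a - / b)) with (2 / (a * b * (a + b))) by (field_simplify_eq; nra).
  apply Rmult_le_reg_r with (b * b * b * (a + b) * a); [repeat apply Rmult_lt_0_compat; lra|].
  replace (/ (b * b * b) * (b * b * b * (a + b) * a)) with ((a + b) * a) by (field; lra).
  replace (2 / (a * b * (a + b)) * (b * b * b * (a + b) * a)) with (2 * b * b) by (field; lra).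
  nra.
Qed.

Lemma sum_inv_pow_3_2_le N M :
  (2 <= N)%nat ->
  sum_f_R0 (fun j => / (INR (N + j) * sqrt (INR (N + j)))) M <= 2 / sqrt (INR (N - 1)).
Proof.
  intros HN. set (f := fun j => 2 * / sqrt (INR (N - 1 + j))).
  apply Rle_trans with (sum_f_R0 (fun j => f j - f (S j)) M).
  - apply sum_Rle. intros j _. unfold f.
    replace (INR (N - 1 + S j)) with (INR (N + j)) by (f_equal; lia).
    replace (INR (N - 1 + j)) with (INR (N + j) - 1)
      by (replace (N + j)%nat with (S (N - 1 + j)) by lia; rewrite S_INR; ring).
    assert (1 < INR (N + j)) by (apply (lt_INR 1); lia).
    pose proof (inv_pow_3_2_le_telescope (INR (N + j)) H). lra.
  - assert (Htel : forall g : nat -> R, sum_f_R0 (fun j => g j - g (S j)) M = g O - g (S M))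
      by (intros g; induction M as [|M IH]; cbn; [|rewrite IH]; ring).
    rewrite Htel. unfold f. rewrite Nat.add_0_r.
    assert (0 <= 2 * / sqrt (INR (N - 1 + S M))).
    { apply Rmult_le_pos; [lra|]. left; apply Rinv_0_lt_compat, sqrt_lt_R0, lt_0_INR; lia. }
    unfold Rdiv. lra.
Qed.

Definition coord_weights (n : nat) (P : list (list nat * R)) : Prop :=
  Forall (fun t => valid_index n (fst t)) P /\ NoDup (map fst P) /\
  Forall (fun t => 0 <= snd t) P /\ sumR (map snd P) <= 1.

Lemma grid_error_le r : 1 <= r -> (/ (2 * r)) ^ 4 <= / sqrt r / 16.
Proof.
  intros Hr. assert (Hs : 0 < sqrt r) by (apply sqrt_lt_R0; lra).
  assert (sqrt r <= r).
  { assert (1 <= sqrt r) by (rewrite <- sqrt_1; now apply sqrt_le_1_alt).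
    pose proof (sqrt_sqrt r ltac:(lra)). nra. }
  assert (r <= r ^ 4).
  { assert (1 <= r * r) by nra. assert (1 <= r * (r * r)) by nra.
    replace (r ^ 4) with (r * (r * (r * r))) by ring. nra. }
  rewrite pow_inv. unfold Rdiv. rewrite <- Rinv_mult.
  apply Rinv_le_contravar; [nra|]. replace ((2 * r) ^ 4) with (16 * r ^ 4) by ring. lra.
Qed.

Lemma dev_cover_sqrt_meas_le P r K :
  1 <= INR r -> sum_sq_weights P <= K / INR r ->
  sumR (map box_meas (dev_cover r P (/ sqrt (INR r)))) <= 3 * K ^ 2 * / (INR r * sqrt (INR r)).
Proof.
  intros Hr HS. assert (HK : (1 <= r)%nat) by (apply INR_le; rewrite INR_1; lra).
  set (x := INR r) in *.
  assert (Hsq : 0 < sqrt x) by (apply sqrt_lt_R0; lra).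
  assert (Hsx : sqrt x * sqrt x = x) by (apply sqrt_sqrt; lra).
  eapply Rle_trans; [apply dev_cover_meas_le; [exact HK | apply Rinv_0_lt_compat; lra]|].
  pose proof (sum_sq_weights_nonneg P).
  assert (sum_sq_weights P ^ 2 <= (K / x) ^ 2) by (apply pow_incr; lra).
  replace (3 * sum_sq_weights P ^ 2 / / sqrt x) with (3 * sqrt x * sum_sq_weights P ^ 2)
    by (field; lra).
  replace (3 * K ^ 2 * / (x * sqrt x)) with (3 * sqrt x * (K / x) ^ 2)
    by (rewrite <- Hsx at 2 3; field; lra).
  apply Rmult_le_compat_l; lra.
Qed.

Lemma tail_sum_le_eps K eps N M :
  0 < eps -> (2 <= N)%nat -> (6 * K ^ 2 / eps) ^ 2 <= INR (N - 1) ->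
  3 * K ^ 2 * sum_f_R0 (fun j => / (INR (N + j) * sqrt (INR (N + j)))) M <= eps.
Proof.
  intros Heps HN HK. pose proof (pow2_ge_0 K).
  assert (Hq : 0 <= 6 * K ^ 2 / eps)
    by (apply Rmult_le_pos; [lra | left; apply Rinv_0_lt_compat; lra]).
  assert (Hsq : 6 * K ^ 2 / eps <= sqrt (INR (N - 1)))
    by (rewrite <- (sqrt_pow2 (6 * K ^ 2 / eps)) by auto; now apply sqrt_le_1_alt).
  assert (0 < sqrt (INR (N - 1))) by (apply sqrt_lt_R0, lt_0_INR; lia).
  apply Rle_trans with (3 * K ^ 2 * (2 / sqrt (INR (N - 1)))).
  { apply Rmult_le_compat_l; [lra | now apply sum_inv_pow_3_2_le]. }
  apply Rmult_le_reg_r with (sqrt (INR (N - 1))); [lra|].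
  replace (3 * K ^ 2 * (2 / sqrt (INR (N - 1))) * sqrt (INR (N - 1))) with (eps * (6 * K ^ 2 / eps))
    by (field; lra).
  apply Rmult_le_compat_l; lra.
Qed.

(* Borel--Cantelli: the exceptional sets [{T_r^4 > r^(-1/2)}] have measure [O(r^(-3/2))],
   which is summable. *)
Lemma weighted_dev_cv_0_ae n (P : nat -> list (list nat * R)) K r0 :
  (forall r, (r0 <= r)%nat -> coord_weights n (P r) /\ sum_sq_weights (P r) <= K / INR r) ->
  almost_every n (fun x => Un_cv (fun r => weighted_dev x (P r)) 0).
Proof.
  intros HP. apply null_set_of_box_families. intros eps Heps.
  destruct (nat_above ((6 * K ^ 2 / eps) ^ 2)) as [N HN].
  set (R0 := (r0 + 2 + N)%nat).
  exists (fun j => dev_cover (R0 + j) (P (R0 + j)%nat) (/ sqrt (INR (R0 + j)))). split; [|split].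
  - intros j. destruct (HP (R0 + j)%nat ltac:(lia)) as [[Hv [Hnd _]] _].
    apply dev_cover_wf; auto; lia.
  - intros M.
    assert (HN' : (6 * K ^ 2 / eps) ^ 2 <= INR (R0 - 1))
      by (eapply Rle_trans; [exact HN | apply le_INR; unfold R0; lia]).
    eapply Rle_trans; [|apply (tail_sum_le_eps K eps R0 M); auto; lia].
    rewrite scal_sum. apply sum_Rle. intros j _. rewrite Rmult_comm.
    apply dev_cover_sqrt_meas_le; [apply (le_INR 1); lia | apply HP; lia].
  - intros x Hx Hnc.
    assert (Hex : exists r, (R0 <= r)%nat /\ / sqrt (INR r) < weighted_dev x (P r) ^ 4).
    { apply NNPP. intros Hne. apply Hnc, (Un_cv_0_of_pow4_le _ R0).
      intros r Hr. apply Rnot_lt_le. intros Hg. apply Hne. exists r; auto. }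
    destruct Hex as [r [Hr HT]].
    destruct (HP r ltac:(lia)) as [[Hv [_ [Hw Hs]]] _].
    exists (r - R0)%nat. replace (R0 + (r - R0))%nat with r by lia.
    assert (1 <= INR r) by (apply (le_INR 1); lia).
    apply (dev_cover_covers n); auto; [lia | apply grid_error_le; lra].
Qed.

Definition pure_weights (n q r p : nat) : list (list nat * R) :=
  map (fun I => (I, pure_entry n r I p q / pure_total n r p q)) (combs (n - 1) (seq 1 r)).

Definition esym_scale (n q : nat) : R :=
  2 ^ (q - 1) * INR (fact (q - 1)) * (2 ^ (n - q) * INR (fact (n - q))).

Lemma esym_scale_pos n q : 0 < esym_scale n q.
Proof.
  unfold esym_scale. repeat apply Rmult_lt_0_compat; try (apply pow_lt; lra); apply INR_fact_lt_0.
Qed.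

Section PureWeights.

Variables (n q r p : nat).
Hypotheses (Hn : (2 <= n)%nat) (Hq : (1 <= q <= n)%nat) (Hp : (p <= r - n)%nat)
  (Hp1 : (1 <= p)%nat) (Hp2 : (1 <= r - p - n)%nat).


Lemma pure_total_ge :
  INR p ^ (2 * (q - 1)) * INR (r - p - n) ^ (2 * (n - q))
  <= esym_scale n q * (pure_total n r p q / pure_coef n r (p + q)).
Proof.
  rewrite pure_total_eq by lia. pose proof (pure_coef_pos n r (p + q)).
  pose proof (esym_upto_ge (q - 1) (p + q - 1)) as L1.
  replace (p + q - 1 - (q - 1))%nat with p in L1 by lia.
  pose proof (esym_upto_ge (n - q) (r - (p + q))) as L2.
  replace (r - (p + q) - (n - q))%nat with (r - p - n)%nat in L2 by lia.
  replace (esym_scale n q * (pure_coef n r (p + q) * esym_upto (q - 1) (p + q - 1)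
                                * esym_upto (n - q) (r - (p + q))
              / pure_coef n r (p + q)))
    with ((2 ^ (q - 1) * INR (fact (q - 1)) * esym_upto (q - 1) (p + q - 1)) *
          (2 ^ (n - q) * INR (fact (n - q)) * esym_upto (n - q) (r - (p + q))))
    by (unfold esym_scale; field; lra).
  apply Rmult_le_compat; auto; apply pow_le, pos_INR.
Qed.

Lemma pure_total_pos : 0 < pure_total n r p q.
Proof.
  pose proof pure_total_ge as H.
  pose proof (esym_scale_pos n q). pose proof (pure_coef_pos n r (p + q)).
  assert (0 < INR p ^ (2 * (q - 1)) * INR (r - p - n) ^ (2 * (n - q)))
    by (apply Rmult_lt_0_compat; apply pow_lt, lt_0_INR; lia).
  assert (0 < pure_total n r p q / pure_coef n r (p + q)).
  { apply Rmult_lt_reg_l with (esym_scale n q); lra. }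
  replace (pure_total n r p q)
    with (pure_total n r p q / pure_coef n r (p + q) * pure_coef n r (p + q))
    by (field; lra).
  now apply Rmult_lt_0_compat.
Qed.

Lemma pure_weights_coord : coord_weights n (pure_weights n q r p).
Proof.
  pose proof pure_total_pos as HW. unfold pure_weights.
  split; [|split; [|split]].
  - apply Forall_forall; intros t Ht. apply in_map_iff in Ht as [I [<- HI]].
    apply (combs_seq_valid n r I HI).
  - rewrite map_map, map_id. apply combs_NoDup, seq_NoDup.
  - apply Forall_forall; intros t Ht. apply in_map_iff in Ht as [I [<- HI]]. cbn.
    apply Rmult_le_pos; [apply (pure_entry_bounds n r p q I); auto; lia |].
    left; now apply Rinv_0_lt_compat.
  - rewrite map_map. cbn.
    rewrite (sumR_map_ext _ (fun I => / pure_total n r p q * pure_entry n r I p q))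
      by (intros; unfold Rdiv; ring).
    rewrite sumR_map_scal. fold (pure_total n r p q). right. field. lra.
Qed.

Lemma pure_weight_le t :
  In t (pure_weights n q r p) ->
  snd t <= esym_scale n q * INR r ^ (n - 1)
           / (INR p ^ (2 * (q - 1)) * INR (r - p - n) ^ (2 * (n - q))).
Proof.
  intros Ht. apply in_map_iff in Ht as [I [<- HI]]. cbn [snd].
  pose proof pure_total_pos as HW. pose proof pure_total_ge as HWp.
  pose proof (pure_entry_bounds n r p q I ltac:(lia) Hq Hp HI) as [_ Hw].
  pose proof (pure_coef_pos n r (p + q)). pose proof (esym_scale_pos n q).
  set (S := INR p ^ (2 * (q - 1)) * INR (r - p - n) ^ (2 * (n - q))) in *.
  assert (HS : 0 < S) by (apply Rmult_lt_0_compat; apply pow_lt, lt_0_INR; lia).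
  assert (0 <= INR r ^ (n - 1)) by (apply pow_le, pos_INR).
  apply Rmult_le_reg_r with (pure_total n r p q * S); [nra|].
  replace (pure_entry n r I p q / pure_total n r p q * (pure_total n r p q * S))
    with (pure_entry n r I p q * S) by (field; lra).
  replace (esym_scale n q * INR r ^ (n - 1) / S * (pure_total n r p q * S))
    with (pure_coef n r (p + q) * INR r ^ (n - 1) *
          (esym_scale n q * (pure_total n r p q / pure_coef n r (p + q))))
    by (field; lra).
  apply Rle_trans with (pure_coef n r (p + q) * INR r ^ (n - 1) * S).
  - apply Rmult_le_compat_r; lra.
  - apply Rmult_le_compat_l; [apply Rmult_le_pos|]; lra.
Qed.

(* [k_{p,q}(x; r) / pure_total = 1/2 + T_r(x)], and [pure_total] is [C(r-n,p) mu(r,p)] up to the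
   two normalised elementary symmetric factors. *)
Lemma pure_ratio_eq x :
  kpq n x r p q / (C (r - n) p * mu n q r p) =
  esym_norm (q - 1) p * esym_norm (n - q) (r - p - n) *
  (1 + 2 * weighted_dev x (pure_weights n q r p)).
Proof.
  pose proof pure_total_pos as HW.
  assert (HT : weighted_dev x (pure_weights n q r p) = kpq n x r p q / pure_total n r p q - 1 / 2).
  { unfold weighted_dev, pure_weights. rewrite map_map. cbn.
    rewrite (sumR_map_ext _ (fun I => / pure_total n r p q * (x I * pure_entry n r I p q)
                               + (- / (2 * pure_total n r p q)) * pure_entry n r I p q))
      by (intros; field; lra).
    rewrite sumR_map_plus, !sumR_map_scal. fold (pure_total n r p q).
    unfold kpq. change (fold_right Rplus 0) with sumR. field. lra. }
  rewrite HT.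
  pose proof (pure_total_eq n r p q ltac:(lia) Hq Hp) as HWf.
  set (s2 := (r - p - n)%nat) in *. set (k1 := (q - 1)%nat) in *. set (k2 := (n - q)%nat) in *.
  replace (p + q - 1)%nat with (p + k1)%nat in HWf by (unfold k1; lia).
  replace (r - (p + q))%nat with (s2 + k2)%nat in HWf by (unfold s2, k2; lia).
  unfold pure_coef in HWf.
  replace (p + q - 1)%nat with (p + k1)%nat in HWf by (unfold k1; lia).
  replace (r - (p + q))%nat with (s2 + k2)%nat in HWf by (unfold s2, k2; lia).
  unfold C, mu, esym_norm. replace (r - n - p)%nat with s2 by (unfold s2; lia). fold s2 k1 k2.
  assert (Hn2 : 2 ^ n = 2 * 2 ^ k1 * 2 ^ k2).
  { replace n with (1 + k1 + k2)%nat at 1 by (unfold k1, k2; lia). rewrite !pow_add. cbn. ring. }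
  rewrite Hn2.
  assert (0 < INR p) by (apply lt_0_INR; lia).
  assert (0 < INR s2) by (apply lt_0_INR; unfold s2; lia).
  assert (F : forall m, INR (fact m) <> 0) by (intros; apply INR_fact_neq_0).
  assert (INR p ^ k1 <> 0) by (apply pow_nonzero; lra).
  assert (INR s2 ^ k2 <> 0) by (apply pow_nonzero; lra).
  assert (2 ^ k1 <> 0) by (apply pow_nonzero; lra).
  assert (2 ^ k2 <> 0) by (apply pow_nonzero; lra).
  rewrite HWf in *.
  assert (esym_upto k1 (p + k1) <> 0) by (intros Habs; rewrite Habs in HW; lra).
  assert (esym_upto k2 (s2 + k2) <> 0) by (intros Habs; rewrite Habs in HW; lra).
  field. repeat split; auto.
Qed.

End PureWeights.

Definition balanced (n : nat) (c : R) (p : nat -> nat) (r : nat) : Prop :=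
  (p r <= r - n)%nat /\ (1 <= p r)%nat /\ (1 <= r - p r - n)%nat /\
  c / 2 * INR r <= INR (p r) /\ c / 2 * INR r <= INR (r - p r - n).

Lemma balanced_eventually n c p :
  0 < c < 1 / 2 ->
  (forall r, (n <= r)%nat -> (p r <= r - n)%nat /\ c <= INR (p r) / INR r <= 1 - c) ->
  exists r0, forall r, (r0 <= r)%nat -> balanced n c p r.
Proof.
  intros hc hp.
  destruct (nat_above ((2 * INR n + 2) / c)) as [N HN].
  exists (n + 1 + N)%nat. intros r Hr. destruct (hp r ltac:(lia)) as [H1 [H2 H3]].
  assert (Hr0 : 0 < INR r) by (apply lt_0_INR; lia).
  assert (Hcr : 2 * INR n + 2 <= c * INR r).
  { apply Rmult_le_reg_r with (/ c); [apply Rinv_0_lt_compat; lra|].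
    replace (c * INR r * / c) with (INR r) by (field; lra).
    eapply Rle_trans; [exact HN | apply le_INR; lia]. }
  assert (Hp1 : c * INR r <= INR (p r)).
  { apply Rmult_le_reg_r with (/ INR r); [apply Rinv_0_lt_compat; lra|].
    replace (c * INR r * / INR r) with c by (field; lra). exact H2. }
  assert (Hp2 : INR (p r) <= (1 - c) * INR r).
  { apply Rmult_le_reg_r with (/ INR r); [apply Rinv_0_lt_compat; lra|].
    replace ((1 - c) * INR r * / INR r) with (1 - c) by (field; lra). exact H3. }
  assert (Hs2 : INR (r - p r - n) = INR r - INR (p r) - INR n) by (rewrite !minus_INR by lia; ring).
  pose proof (pos_INR n).
  assert (Hb1 : c / 2 * INR r <= INR (p r)) by nra.
  assert (Hb2 : c / 2 * INR r <= INR (r - p r - n)) by (rewrite Hs2; nra).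
  assert (Hb : 1 <= c / 2 * INR r) by nra.
  repeat split; auto.
  - destruct (p r); [cbn in Hb1; lra | lia].
  - destruct (r - p r - n)%nat; [cbn in Hb2; lra | lia].
Qed.

Lemma pure_weight_le_balanced n q c p :
  (2 <= n)%nat -> (1 <= q <= n)%nat -> 0 < c ->
  exists K, 0 <= K /\
    forall r t, balanced n c p r -> In t (pure_weights n q r (p r)) -> snd t <= K / INR r.
Proof.
  intros hn hq hc. set (beta := c / 2). assert (Hbeta : 0 < beta) by (unfold beta; lra).
  set (D0 := esym_scale n q). assert (HD0 : 0 < D0) by apply esym_scale_pos.
  exists (D0 / beta ^ (2 * (n - 1))).
  split; [unfold Rdiv; apply Rmult_le_pos; [lra | left; apply Rinv_0_lt_compat, pow_lt; lra]|].
  intros r t [G1 [G2 [G3 [G4 G5]]]] Ht. fold beta in G4, G5.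
  eapply Rle_trans; [apply (pure_weight_le n q r (p r)); auto|]. fold D0.
  (* the weight is [O(r^(n-1) / (beta r)^(2(n-1)))] *)
  assert (Hx : 1 <= INR r) by (apply (le_INR 1); lia). set (x := INR r) in *.
  assert (Hpow : (beta * x) ^ (2 * (n - 1))
                 <= INR (p r) ^ (2 * (q - 1)) * INR (r - p r - n) ^ (2 * (n - q))).
  { replace (2 * (n - 1))%nat with (2 * (q - 1) + 2 * (n - q))%nat by lia. rewrite pow_add.
    apply Rmult_le_compat; try (apply pow_le; nra); apply pow_incr; nra. }
  assert (Hxp : 0 < x ^ (n - 1)) by (apply pow_lt; lra).
  assert (Hxn : x <= x ^ (n - 1)).
  { replace (n - 1)%nat with (S (n - 2)) by lia. cbn. rewrite <- (Rmult_1_r x) at 1.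
    apply Rmult_le_compat_l; [lra | apply pow_R1_Rle; lra]. }
  assert (Hbp : 0 < (beta * x) ^ (2 * (n - 1))) by (apply pow_lt; nra).
  apply Rle_trans with (D0 * x ^ (n - 1) / (beta * x) ^ (2 * (n - 1))).
  - unfold Rdiv. apply Rmult_le_compat_l; [apply Rmult_le_pos; lra|].
    apply Rinv_le_contravar; auto.
  - rewrite Rpow_mult_distr. replace (2 * (n - 1))%nat with ((n - 1) + (n - 1))%nat by lia.
    rewrite (pow_add x). assert (0 < beta ^ (n - 1 + (n - 1))) by (apply pow_lt; lra).
    replace (D0 * x ^ (n - 1) / (beta ^ (n - 1 + (n - 1)) * (x ^ (n - 1) * x ^ (n - 1))))
      with (D0 / beta ^ (n - 1 + (n - 1)) / x ^ (n - 1)) by (field; lra).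
    unfold Rdiv.
    apply Rmult_le_compat_l; [apply Rmult_le_pos; [lra | left; apply Rinv_0_lt_compat; lra]|].
    apply Rinv_le_contravar; lra.
Qed.

Lemma pure_weights_sum_sq_le n q c p :
  (2 <= n)%nat -> (1 <= q <= n)%nat -> 0 < c ->
  exists K, forall r, balanced n c p r -> sum_sq_weights (pure_weights n q r (p r)) <= K / INR r.
Proof.
  intros hn hq hc. destruct (pure_weight_le_balanced n q c p hn hq hc) as [K [HK0 HK]].
  exists K. intros r Hb. pose proof Hb as [G1 [G2 [G3 _]]].
  destruct (pure_weights_coord n q r (p r) hn hq G1 G2 G3) as [_ [_ [Hw Hs]]].
  rewrite Forall_forall in Hw.
  assert (0 <= K / INR r)
    by (apply Rmult_le_pos; [lra | left; apply Rinv_0_lt_compat, lt_0_INR; lia]).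
  apply Rle_trans with (K / INR r * sumR (map snd (pure_weights n q r (p r))));
    [|rewrite <- (Rmult_1_r (K / INR r)) at 2; now apply Rmult_le_compat_l].
  apply sum_sq_weights_le. intros t Ht. split; [now apply Hw | now apply HK].
Qed.

Lemma esym_norm_cv_of_linear_growth k c (s : nat -> nat) r0 :
  0 < c ->
  (forall r, (r0 <= r)%nat -> (1 <= s r)%nat /\ c / 2 * INR r <= INR (s r)) ->
  Un_cv (fun r => esym_norm k (s r)) 1.
Proof.
  intros hc Hs. destruct (esym_norm_dist_le k) as [B [HB HBs]].
  apply (Un_cv_of_dist_le_inv _ _ (B / (c / 2)) (S r0)). intros r Hr.
  destruct (Hs r ltac:(lia)) as [H1 H2].
  assert (0 < INR r) by (apply lt_0_INR; lia).
  eapply Rle_trans; [now apply HBs|].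
  unfold Rdiv. rewrite Rmult_assoc. apply Rmult_le_compat_l; auto.
  rewrite <- Rinv_mult. apply Rinv_le_contravar; [nra | lra].
Qed.

Lemma ratio_cv_of_weighted_dev_cv n q c p r0 x :
  (2 <= n)%nat -> (1 <= q <= n)%nat -> 0 < c ->
  (forall r, (r0 <= r)%nat -> balanced n c p r) ->
  Un_cv (fun r => weighted_dev x (pure_weights n q r (p r))) 0 ->
  Un_cv (fun r => kpq n x r (p r) q / (C (r - n) (p r) * mu n q r (p r))) 1.
Proof.
  intros hn hq hc Hb HT.
  apply (Un_cv_eventually _ (fun r => esym_norm (q - 1) (p r) * esym_norm (n - q) (r - p r - n) *
                                      (1 + 2 * weighted_dev x (pure_weights n q r (p r)))) 1 r0).
  { intros r Hr. destruct (Hb r Hr) as [G1 [G2 [G3 _]]]. now apply pure_ratio_eq. }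
  match goal with |- Un_cv ?u 1 =>
    enough (H : Un_cv u (1 * 1 * (1 + 2 * 0)))
      by (now replace (1 * 1 * (1 + 2 * 0)) with 1 in H by ring) end.
  apply CV_mult; [apply CV_mult|].
  - apply (esym_norm_cv_of_linear_growth _ c _ r0 hc).
    intros r Hr. now destruct (Hb r Hr) as [_ [? [_ [? _]]]].
  - apply (esym_norm_cv_of_linear_growth _ c _ r0 hc).
    intros r Hr. now destruct (Hb r Hr) as [_ [_ [? [_ ?]]]].
  - apply CV_plus; [apply Un_cv_const|]. apply CV_mult; [apply Un_cv_const | exact HT].
Qed.

Theorem theorem2p1 (n q : nat) (c : R) (p : nat -> nat)
  (hn : (2 <= n)%nat) (hq : (1 <= q <= n)%nat) (hc : 0 < c < 1/2)
  (hp : forall r : nat, (n <= r)%nat ->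
          (p r <= r - n)%nat /\ c <= INR (p r) / INR r <= 1 - c) :
  almost_every n (fun x =>
    Un_cv (fun r => kpq n x r (p r) q
                    / (C (r - n) (p r) * mu n q r (p r))) 1).
Proof.
  destruct (balanced_eventually n c p hc hp) as [r0 Hr0].
  destruct (pure_weights_sum_sq_le n q c p hn hq (proj1 hc)) as [K HK].
  apply (almost_every_mono n _ _
           (fun x => ratio_cv_of_weighted_dev_cv n q c p r0 x hn hq (proj1 hc) Hr0)).
  apply (weighted_dev_cv_0_ae n _ K r0). intros r Hr.
  destruct (Hr0 r Hr) as [G1 [G2 [G3 _]]].
  split; [now apply pure_weights_coord | now apply HK, Hr0].
Qed.
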